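(* Let $(\mathbf T,\mathbf A,\mathrm{VAR},\mathrm{OP},\mathrm{ABS},\mathrm{FRESH},\mathrm{FRESHABS},\_[\_/\_]_\_)$ be an FS model. Then there exist functions $f:\mathrm{term}\to\mathbf T$ and $f_{Abs}:\mathrm{abs}\to\mathbf A$ such that, for all good terms $X,Y$, good abstractions $A$, all $inp:(\mathrm{index},\mathrm{term})\mathrm{input}$ and $binp:(\mathrm{bindex},\mathrm{abs})\mathrm{input}$ with good values and domains of cardinality $<|\mathrm{var}|$, and all $\delta,xs,x,ys,y$: $f(\mathrm{Var}\;xs\;x)=\mathrm{VAR}\;xs\;x$; $f(\mathrm{Op}\;\delta\;inp\;binp)=\mathrm{OP}\;\delta\;(\uparrow f\;inp)\;(\uparrow f_{Abs}\;binp)$; $f_{Abs}(\mathrm{Abs}\;xs\;x\;X)=\mathrm{ABS}\;xs\;x\;(f\;X)$; $f(X[Y/y]_{ys})=(f\;X)[(f\;Y)/y]_{ys}$; $f_{Abs}(A[Y/y]_{ys})=(f_{Abs}\;A)[(f\;Y)/y]_{ys}$; $\mathrm{fresh}\;xs\;x\;X\Rightarrow\mathrm{FRESH}\;xs\;x\;(f\;X)$; $\mathrm{freshAbs}\;xs\;x\;A\Rightarrow\mathrm{FRESHABS}\;xs\;x\;(f_{Abs}\;A)$. Moreover, if $g:\mathrm{term}\to\mathbf T$ and $g_{Abs}:\mathrm{abs}\to\mathbf A$ satisfy the same properties, then $f\;X=g\;X$ for all good terms $X$ and $f_{Abs}\;A=g_{Abs}\;A$ for all good abstractions $A$.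
   Context: Fix types $\mathrm{var}$, $\mathrm{varsort}$, $\mathrm{index}$, $\mathrm{bindex}$, $\mathrm{opsym}$, with $|\mathrm{var}|$ an infinite regular cardinal. $(\alpha,\beta)\,\mathrm{input}$ = partial functions $\alpha\to\beta\;\mathrm{option}$; $\mathrm{dom}\,f=\{i\mid f\,i\ne\mathrm{None}\}$; $\uparrow P\;inp$ means $P$ holds of all defined values of $inp$; $\uparrow g\;inp$ applies $g$ to all defined values. Terms ($\mathrm{term}$) and abstractions ($\mathrm{abs}$) are alpha-equivalence classes of the free datatypes $\mathrm{qterm}=\mathrm{qVar}\;\mathrm{varsort}\;\mathrm{var}\mid\mathrm{qOp}\;\mathrm{opsym}\;((\mathrm{index},\mathrm{qterm})\mathrm{input})\;((\mathrm{bindex},\mathrm{qabs})\mathrm{input})$, $\mathrm{qabs}=\mathrm{qAbs}\;\mathrm{varsort}\;\mathrm{var}\;\mathrm{qterm}$ ($x$ of varsort $xs$ bound in $X$ in $\mathrm{qAbs}\;xs\;x\;X$), with lifted constructors $\mathrm{Var},\mathrm{Op},\mathrm{Abs}$; $\mathrm{fresh}/\mathrm{freshAbs}\;xs\;x$: the variable $x$ of varsort $xs$ does not occur free; $\_[Y/y]_{ys}$: capture-avoiding substitution of $Y$ for free occurrences of the variable $y$ of varsort $ys$ (on terms and abstractions). Good: every $\mathrm{Op}$ node has inputs with domains of cardinality $<|\mathrm{var}|$. An FS model consists of types $\mathbf T,\mathbf A$ and operations $\mathrm{VAR}:\mathrm{varsort}\to\mathrm{var}\to\mathbf T$, $\mathrm{OP}:\mathrm{opsym}\to(\mathrm{index},\mathbf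 T)\mathrm{input}\to(\mathrm{bindex},\mathbf A)\mathrm{input}\to\mathbf T$, $\mathrm{ABS}:\mathrm{varsort}\to\mathrm{var}\to\mathbf T\to\mathbf A$, $\mathrm{FRESH}:\mathrm{varsort}\to\mathrm{var}\to\mathbf T\to\mathrm{bool}$, $\mathrm{FRESHABS}:\mathrm{varsort}\to\mathrm{var}\to\mathbf A\to\mathrm{bool}$, $\_[\_/\_]_\_:\mathbf T\to\mathbf T\to\mathrm{var}\to\mathrm{varsort}\to\mathbf T$ and $\_[\_/\_]_\_:\mathbf A\to\mathbf T\to\mathrm{var}\to\mathrm{varsort}\to\mathbf A$, satisfying, for all arguments (with $inp,binp$ ranging over inputs whose domains have cardinality $<|\mathrm{var}|$): (F1) $(ys,y)\ne(xs,x)\Rightarrow\mathrm{FRESH}\;ys\;y\;(\mathrm{VAR}\;xs\;x)$; (F2) $\uparrow(\mathrm{FRESH}\;ys\;y)\;inp\wedge\uparrow(\mathrm{FRESHABS}\;ys\;y)\;binp\Rightarrow\mathrm{FRESH}\;ys\;y\;(\mathrm{OP}\;\delta\;inp\;binp)$; (F3) $(ys,y)=(xs,x)\vee\mathrm{FRESH}\;ys\;y\;X\Rightarrow\mathrm{FRESHABS}\;ys\;y\;(\mathrm{ABS}\;xs\;x\;X)$; (S1) $(\mathrm{VAR}\;xs\;x)[Y/y]_{ys}=Y$ if $(xs,x)=(ys,y)$, else $\mathrm{VAR}\;xs\;x$; (S2) $(\mathrm{OP}\;\delta\;inp\;binp)[Y/y]_{ys}=\mathrm{OP}\;\delta\;(\uparrow(\_[Y/y]_{ys})\;inp)\;(\uparrow(\_[Y/y]_{ys})\;binp)$;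 (S3) $(xs,x)\ne(ys,y)\wedge\mathrm{FRESH}\;xs\;x\;Y\Rightarrow(\mathrm{ABS}\;xs\;x\;X)[Y/y]_{ys}=\mathrm{ABS}\;xs\;x\;(X[Y/y]_{ys})$; (R1) $y\notin\{x,x'\}\wedge\mathrm{FRESH}\;xs\;y\;X\wedge\mathrm{FRESH}\;xs\;y\;X'\wedge X[(\mathrm{VAR}\;xs\;y)/x]_{xs}=X'[(\mathrm{VAR}\;xs\;y)/x']_{xs}\Rightarrow\mathrm{ABS}\;xs\;x\;X=\mathrm{ABS}\;xs\;x'\;X'$; (R2) $\mathrm{FRESH}\;xs\;y\;X\Rightarrow\mathrm{ABS}\;xs\;x\;X=\mathrm{ABS}\;xs\;y\;(X[(\mathrm{VAR}\;xs\;y)/x]_{xs})$. *)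

From Stdlib Require Import Classical ClassicalEpsilon FunctionalExtensionality
  PropExtensionality Relations.Relation_Operators.

Set Implicit Arguments.

Definition lt_card (A B : Type) : Prop :=
  (exists f : A -> B, forall a1 a2, f a1 = f a2 -> a1 = a2) /\
  ~ (exists g : B -> A, forall b1 b2, g b1 = g b2 -> b1 = b2).

Definition infinite_type (V : Type) : Prop :=
  forall l : list V, exists x, ~ List.In x l.

Definition infinite_regular (V : Type) : Prop :=
  infinite_type V /\
  forall (I : Type) (F : I -> V -> Prop),
    lt_card I V -> (forall i, lt_card {x : V | F i x} V) ->
    lt_card {x : V | exists i, F i x} V.

Definition input (I A : Type) := I -> option A.
Definition dom (I A : Type) (inp : input I A) := {i : I | inp i <> None}.
Definition liftAll (I A : Type) (P : A -> Prop) (inp : input I A) : Prop :=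
  forall i a, inp i = Some a -> P a.
Definition lift (I A B : Type) (g : A -> B) (inp : input I A) : input I B :=
  fun i => option_map g (inp i).
Definition small (V I A : Type) (inp : input I A) : Prop := lt_card (dom inp) V.

Definition eqdec (A : Type) (a b : A) : bool :=
  if excluded_middle_informative (a = b) then true else false.

Section Syntax.
Variables (var varsort index bindex opsym : Type).

Inductive qterm : Type :=
| qVar : varsort -> var -> qterm
| qOp : opsym -> (index -> option qterm) -> (bindex -> option qabs) -> qterm
with qabs : Type :=
| qAbs : varsort -> var -> qterm -> qabs.

Fixpoint qFree (ys : varsort) (y : var) (X : qterm) {struct X} : Prop :=
  match X with
  | qVar xs x => (xs, x) = (ys, y)
  | qOp _ inp binp =>
      (exists i, match inp i with Some X' => qFree ys y X' | None => False end) \/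
      (exists i, match binp i with Some A => qFreeAbs ys y A | None => False end)
  end
with qFreeAbs (ys : varsort) (y : var) (A : qabs) {struct A} : Prop :=
  match A with
  | qAbs xs x X => (xs, x) <> (ys, y) /\ qFree ys y X
  end.

Definition swapv (zs : varsort) (z1 z2 : var) (xs : varsort) (x : var) : var :=
  if eqdec (xs, x) (zs, z1) then z2
  else if eqdec (xs, x) (zs, z2) then z1 else x.

Fixpoint qSwap (zs : varsort) (z1 z2 : var) (X : qterm) {struct X} : qterm :=
  match X with
  | qVar xs x => qVar xs (swapv zs z1 z2 xs x)
  | qOp d inp binp =>
      qOp d (fun i => match inp i with Some X' => Some (qSwap zs z1 z2 X') | None => None end)
            (fun i => match binp i with Some A => Some (qSwapAbs zs z1 z2 A) | None => None end)
  end
with qSwapAbs (zs : varsort) (z1 z2 : var) (A : qabs) {struct A} : qabs :=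
  match A with
  | qAbs xs x X => qAbs xs (swapv zs z1 z2 xs x) (qSwap zs z1 z2 X)
  end.

Inductive alpha : qterm -> qterm -> Prop :=
| alpha_Var : forall xs x, alpha (qVar xs x) (qVar xs x)
| alpha_Op : forall d inp inp' binp binp',
    (forall i, inp i = None <-> inp' i = None) ->
    (forall i X X', inp i = Some X -> inp' i = Some X' -> alpha X X') ->
    (forall i, binp i = None <-> binp' i = None) ->
    (forall i A A', binp i = Some A -> binp' i = Some A' -> alphaAbs A A') ->
    alpha (qOp d inp binp) (qOp d inp' binp')
with alphaAbs : qabs -> qabs -> Prop :=
| alpha_Abs : forall xs x x' X X' y,
    y <> x -> y <> x' -> ~ qFree xs y X -> ~ qFree xs y X' ->
    alpha (qSwap xs y x X) (qSwap xs y x' X') ->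
    alphaAbs (qAbs xs x X) (qAbs xs x' X').

Fixpoint qGood (X : qterm) {struct X} : Prop :=
  match X with
  | qVar _ _ => True
  | qOp _ inp binp =>
      small var inp /\ small var binp /\
      (forall i, match inp i with Some X' => qGood X' | None => True end) /\
      (forall i, match binp i with Some A => qGoodAbs A | None => True end)
  end
with qGoodAbs (A : qabs) {struct A} : Prop :=
  match A with
  | qAbs _ _ X => qGood X
  end.

(* capture-avoiding simultaneous substitution (Stoughton style) *)
Definition upd (rho : varsort -> var -> qterm) (xs : varsort) (x : var) (Z : qterm) :=
  fun ws w => if eqdec (ws, w) (xs, x) then Z else rho ws w.

Fixpoint qPsubst (rho : varsort -> var -> qterm) (X : qterm) {struct X} : qterm :=
  match X with
  | qVar xs x => rho xs x
  | qOp d inp binp =>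
      qOp d (fun i => match inp i with Some X' => Some (qPsubst rho X') | None => None end)
            (fun i => match binp i with Some A => Some (qPsubstAbs rho A) | None => None end)
  end
with qPsubstAbs (rho : varsort -> var -> qterm) (A : qabs) {struct A} : qabs :=
  match A with
  | qAbs xs x X =>
      let z := epsilon (inhabits x)
                 (fun z => forall ws w, qFreeAbs ws w (qAbs xs x X) -> ~ qFree xs z (rho ws w)) in
      qAbs xs z (qPsubst (upd rho xs x (qVar xs z)) X)
  end.

Definition qSubst (X Y : qterm) (y : var) (ys : varsort) : qterm :=
  qPsubst (upd qVar ys y Y) X.
Definition qSubstAbs (A : qabs) (Y : qterm) (y : var) (ys : varsort) : qabs :=
  qPsubstAbs (upd qVar ys y Y) A.

Definition alphaEq := clos_refl_sym_trans qterm alpha.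
Definition alphaAbsEq := clos_refl_sym_trans qabs alphaAbs.

Definition term := {P : qterm -> Prop | exists X, P = alphaEq X}.
Definition abs := {P : qabs -> Prop | exists A, P = alphaAbsEq A}.

Definition cls (X : qterm) : term := exist _ (alphaEq X) (ex_intro _ X eq_refl).
Definition clsAbs (A : qabs) : abs := exist _ (alphaAbsEq A) (ex_intro _ A eq_refl).
Definition rep (t : term) : qterm :=
  proj1_sig (constructive_indefinite_description _ (proj2_sig t)).
Definition repAbs (a : abs) : qabs :=
  proj1_sig (constructive_indefinite_description _ (proj2_sig a)).

Definition Var (xs : varsort) (x : var) : term := cls (qVar xs x).
Definition Op (d : opsym) (inp : input index term) (binp : input bindex abs) : term :=
  cls (qOp d (lift rep inp) (lift repAbs binp)).
Definition Abs (xs : varsort) (x : var) (X : term) : abs := clsAbs (qAbs xs x (rep X)).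

Definition fresh (xs : varsort) (x : var) (X : term) : Prop := ~ qFree xs x (rep X).
Definition freshAbs (xs : varsort) (x : var) (A : abs) : Prop := ~ qFreeAbs xs x (repAbs A).

Definition subst (X Y : term) (y : var) (ys : varsort) : term :=
  cls (qSubst (rep X) (rep Y) y ys).
Definition substAbs (A : abs) (Y : term) (y : var) (ys : varsort) : abs :=
  clsAbs (qSubstAbs (repAbs A) (rep Y) y ys).

Definition good (X : term) : Prop := qGood (rep X).
Definition goodAbs (A : abs) : Prop := qGoodAbs (repAbs A).

Record FSModel (T A : Type)
  (VAR : varsort -> var -> T)
  (OP : opsym -> input index T -> input bindex A -> T)
  (ABS : varsort -> var -> T -> A)
  (FRESH : varsort -> var -> T -> Prop)
  (FRESHABS : varsort -> var -> A -> Prop)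
  (substT : T -> T -> var -> varsort -> T)
  (substA : A -> T -> var -> varsort -> A) : Prop := {
  F1 : forall ys y xs x, (ys, y) <> (xs, x) -> FRESH ys y (VAR xs x);
  F2 : forall ys y d (inp : input index T) (binp : input bindex A),
         small var inp -> small var binp ->
         liftAll (FRESH ys y) inp -> liftAll (FRESHABS ys y) binp ->
         FRESH ys y (OP d inp binp);
  F3 : forall ys y xs x X, ((ys, y) = (xs, x) \/ FRESH ys y X) ->
         FRESHABS ys y (ABS xs x X);
  S1a : forall xs x Y y ys, (xs, x) = (ys, y) -> substT (VAR xs x) Y y ys = Y;
  S1b : forall xs x Y y ys, (xs, x) <> (ys, y) -> substT (VAR xs x) Y y ys = VAR xs x;
  S2 : forall d (inp : input index T) (binp : input bindex A) Y y ys,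
         small var inp -> small var binp ->
         substT (OP d inp binp) Y y ys =
         OP d (lift (fun X => substT X Y y ys) inp) (lift (fun B => substA B Y y ys) binp);
  S3 : forall xs x X Y y ys, (xs, x) <> (ys, y) -> FRESH xs x Y ->
         substA (ABS xs x X) Y y ys = ABS xs x (substT X Y y ys);
  R1 : forall xs x x' y X X', y <> x -> y <> x' ->
         FRESH xs y X -> FRESH xs y X' ->
         substT X (VAR xs y) x xs = substT X' (VAR xs y) x' xs ->
         ABS xs x X = ABS xs x' X';
  R2 : forall xs x y X, FRESH xs y X ->
         ABS xs x X = ABS xs y (substT X (VAR xs y) x xs)
}.

Definition FS_hom (T A : Type)
  (VAR : varsort -> var -> T)
  (OP : opsym -> input index T -> input bindex A -> T)
  (ABS : varsort -> var -> T -> A)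
  (FRESH : varsort -> var -> T -> Prop)
  (FRESHABS : varsort -> var -> A -> Prop)
  (substT : T -> T -> var -> varsort -> T)
  (substA : A -> T -> var -> varsort -> A)
  (f : term -> T) (fAbs : abs -> A) : Prop :=
  (forall xs x, f (Var xs x) = VAR xs x) /\
  (forall d (inp : input index term) (binp : input bindex abs),
     liftAll good inp -> small var inp ->
     liftAll goodAbs binp -> small var binp ->
     f (Op d inp binp) = OP d (lift f inp) (lift fAbs binp)) /\
  (forall xs x X, good X -> fAbs (Abs xs x X) = ABS xs x (f X)) /\
  (forall X Y y ys, good X -> good Y -> f (subst X Y y ys) = substT (f X) (f Y) y ys) /\
  (forall B Y y ys, goodAbs B -> good Y ->
     fAbs (substAbs B Y y ys) = substA (fAbs B) (f Y) y ys) /\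
  (forall xs x X, good X -> fresh xs x X -> FRESH xs x (f X)) /\
  (forall xs x B, goodAbs B -> freshAbs xs x B -> FRESHABS xs x (fAbs B)).

End Syntax.

(* The homomorphism is defined by structural recursion on quasi-terms (qVar, qOp, qAbs go
   to VAR, OP, ABS) and read off on a representative of each alpha-class. Regularity of
   |var| makes the free variables of a good quasi-term a small set, so fresh variables
   always exist. The central identity, proved by an induction that may rename bound
   variables, is that swapping x with a variable y not free in X is interpreted as
   substituting VAR y for x, while substituting for a non-free variable does nothing.
   With it, R1 makes the recursion invariant under alpha-equivalence, and R2, S3 make it
   commute with capture-avoiding substitution once the epsilon-chosen binder of the
   substitution is shown to be irrelevant; F1-F3 give freshness. Uniqueness is induction
   on representatives, since good terms are generated by Var, Op and Abs. *)

From Stdlib Require Import Classical ClassicalEpsilon FunctionalExtensionality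
  PropExtensionality ProofIrrelevance List Relations.Relation_Operators.

Set Implicit Arguments.

Lemma eqdec_true (A : Type) (a b : A) : a = b -> eqdec a b = true.
Proof. intros; unfold eqdec; destruct excluded_middle_informative; congruence. Qed.

Lemma eqdec_false (A : Type) (a b : A) : a <> b -> eqdec a b = false.
Proof. intros; unfold eqdec; destruct excluded_middle_informative; congruence. Qed.

Lemma lt_card_inj (A B V : Type) (f : A -> B) :
  (forall a1 a2, f a1 = f a2 -> a1 = a2) -> lt_card B V -> lt_card A V.
Proof.
  intros Hf [[g Hg] Hn]. split.
  - exists (fun a => g (f a)). intros; apply Hf, Hg; auto.
  - intros [h Hh]. apply Hn. exists (fun v => f (h v)). intros; apply Hh, Hf; auto.
Qed.

Lemma epsilon_ext (A : Type) (h h' : inhabited A) (P P' : A -> Prop) :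
  (forall z, P z <-> P' z) -> epsilon h P = epsilon h' P'.
Proof.
  intros HP.
  assert (P = P') by (apply functional_extensionality; intro; apply propositional_extensionality; auto).
  subst. f_equal. apply proof_irrelevance.
Qed.

Scheme alpha_ind_mut := Induction for alpha Sort Prop
  with alphaAbs_ind_mut := Induction for alphaAbs Sort Prop.
Combined Scheme alpha_alphaAbs_dep_ind from alpha_ind_mut, alphaAbs_ind_mut.

Ltac swapv_brute := unfold swapv, eqdec;
  repeat (destruct excluded_middle_informative; simpl); try congruence;
  repeat match goal with H : (_,_) = (_,_) |- _ => inversion H; clear H; subst end; congruence.

Section Development.
Variables var varsort index bindex opsym : Type.
Hypothesis Hvar : infinite_regular var.
Notation QT := (qterm var varsort index bindex opsym).
Notation QA := (qabs var varsort index bindex opsym).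
Notation qV := (@qVar var varsort index bindex opsym).
Notation sw := (@swapv var varsort).

Section Induction.
Variables (P : QT -> Prop) (Q : QA -> Prop).
Hypothesis HV : forall xs x, P (qV xs x).
Hypothesis HO : forall d inp binp,
  (forall i X, inp i = Some X -> P X) -> (forall i A, binp i = Some A -> Q A) ->
  P (qOp d inp binp).
Hypothesis HA : forall xs x X, P X -> Q (qAbs xs x X).

Fixpoint qterm_ind_mut (X : QT) : P X :=
  match X with
  | qVar _ _ _ xs x => HV xs x
  | qOp d inp binp =>
      HO d inp binp
        (fun i => match inp i as o return (forall X', o = Some X' -> P X') with
                  | Some Y => fun X' e =>
                      match e in _ = o return match o with Some z => P z | None => True end
                      with eq_refl => qterm_ind_mut Y end
                  | None => fun X' e =>
                      match e in _ = o return match o with Some z => P z | None => True end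
                      with eq_refl => I end
                  end)
        (fun i => match binp i as o return (forall A', o = Some A' -> Q A') with
                  | Some Y => fun A' e =>
                      match e in _ = o return match o with Some z => Q z | None => True end
                      with eq_refl => qabs_ind_mut Y end
                  | None => fun A' e =>
                      match e in _ = o return match o with Some z => Q z | None => True end
                      with eq_refl => I end
                  end)
  end
with qabs_ind_mut (A : QA) : Q A :=
  match A with qAbs xs x X => HA xs x (qterm_ind_mut X) end.

Lemma qterm_qabs_ind : (forall X, P X) /\ (forall A, Q A).
Proof. split; [exact qterm_ind_mut | exact qabs_ind_mut]. Qed.

End Induction.

Lemma swapv_l zs a b : sw zs a b zs a = b.
Proof. unfold swapv. rewrite eqdec_true; auto. Qed.

Lemma swapv_r zs a b : sw zs a b zs b = a.
Proof. swapv_brute. Qed.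

Lemma swapv_other zs a b xs x :
  (xs, x) <> (zs, a) -> (xs, x) <> (zs, b) -> sw zs a b xs x = x.
Proof. intros. unfold swapv. rewrite !eqdec_false; auto. Qed.

Lemma swapv_cases zs a b xs x :
  ((xs, x) = (zs, a) /\ sw zs a b xs x = b) \/ ((xs, x) = (zs, b) /\ sw zs a b xs x = a) \/
  ((xs, x) <> (zs, a) /\ (xs, x) <> (zs, b) /\ sw zs a b xs x = x).
Proof.
  destruct (classic ((xs, x) = (zs, a))) as [Ea|Na].
  { left. inversion Ea; subst. split; auto. apply swapv_l. }
  destruct (classic ((xs, x) = (zs, b))) as [Eb|Nb].
  { right; left. inversion Eb; subst. split; auto. apply swapv_r. }
  right; right. repeat split; auto. apply swapv_other; auto.
Qed.

Lemma swapv_involutive zs a b xs x : sw zs a b xs (sw zs a b xs x) = x.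
Proof. swapv_brute. Qed.

Lemma swapv_inj zs a b xs x y : sw zs a b xs x = sw zs a b xs y -> x = y.
Proof. intro E. rewrite <- (swapv_involutive zs a b xs x), E. apply swapv_involutive. Qed.

Lemma swapv_same zs a xs x : sw zs a a xs x = x.
Proof. swapv_brute. Qed.

Lemma swapv_pair_inj zs a b xs x ys y :
  (xs, sw zs a b xs x) = (ys, sw zs a b ys y) <-> (xs, x) = (ys, y).
Proof. split; intro E; inversion E; subst; auto. apply swapv_inj in H1. subst; auto. Qed.

Lemma qFree_qSwap_swapv :
  (forall (X : QT) zs a b ws w, qFree ws (sw zs a b ws w) (qSwap zs a b X) <-> qFree ws w X) /\
  (forall (A : QA) zs a b ws w,
     qFreeAbs ws (sw zs a b ws w) (qSwapAbs zs a b A) <-> qFreeAbs ws w A).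
Proof.
  apply qterm_qabs_ind; intros; simpl.
  - apply swapv_pair_inj.
  - split; intros [[i Hi]|[i Hi]]; [left|right|left|right]; exists i.
    + destruct (inp i) eqn:E; [apply (proj1 (H i _ E zs a b ws w)) | ]; auto.
    + destruct (binp i) eqn:E; [apply (proj1 (H0 i _ E zs a b ws w)) | ]; auto.
    + destruct (inp i) eqn:E; [apply (proj2 (H i _ E zs a b ws w)) | ]; auto.
    + destruct (binp i) eqn:E; [apply (proj2 (H0 i _ E zs a b ws w)) | ]; auto.
  - rewrite H. split; intros [Hn Hf]; split; auto; intro E; apply Hn;
      [apply swapv_pair_inj; auto | apply swapv_pair_inj in E; auto].
Qed.

Lemma qFree_qSwap zs a b ws w (X : QT) :
  qFree ws w (qSwap zs a b X) <-> qFree ws (sw zs a b ws w) X.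
Proof.
  rewrite <- (proj1 qFree_qSwap_swapv X zs a b ws (sw zs a b ws w)), swapv_involutive. tauto.
Qed.

Lemma qFreeAbs_qSwapAbs zs a b ws w (A : QA) :
  qFreeAbs ws w (qSwapAbs zs a b A) <-> qFreeAbs ws (sw zs a b ws w) A.
Proof.
  rewrite <- (proj2 qFree_qSwap_swapv A zs a b ws (sw zs a b ws w)), swapv_involutive. tauto.
Qed.

Lemma qFree_qSwap_fresh (X : QT) xs c a ns n : ~ qFree xs c X -> ~ qFree xs a X ->
  (qFree ns n (qSwap xs c a X) <-> qFree ns n X).
Proof.
  intros Hc Ha. rewrite qFree_qSwap.
  destruct (swapv_cases xs c a ns n) as [[E1 E2]|[[E1 E2]|[_ [_ E2]]]]; rewrite E2;
    try (inversion E1; subst); tauto.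
Qed.

Fixpoint qRen (pi : varsort -> var -> var) (X : QT) : QT :=
  match X with
  | qVar _ _ _ xs x => qV xs (pi xs x)
  | qOp d inp binp =>
      qOp d (fun i => match inp i with Some X' => Some (qRen pi X') | None => None end)
            (fun i => match binp i with Some A => Some (qRenAbs pi A) | None => None end)
  end
with qRenAbs (pi : varsort -> var -> var) (A : QA) : QA :=
  match A with qAbs xs x X => qAbs xs (pi xs x) (qRen pi X) end.

Lemma qRen_props :
  (forall X : QT, (forall zs a b, qSwap zs a b X = qRen (sw zs a b) X) /\
     (forall pi sg, qRen pi (qRen sg X) = qRen (fun ws w => pi ws (sg ws w)) X) /\
     qRen (fun _ w => w) X = X) /\
  (forall A : QA, (forall zs a b, qSwapAbs zs a b A = qRenAbs (sw zs a b) A) /\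
     (forall pi sg, qRenAbs pi (qRenAbs sg A) = qRenAbs (fun ws w => pi ws (sg ws w)) A) /\
     qRenAbs (fun _ w => w) A = A).
Proof.
  apply qterm_qabs_ind; intros.
  - repeat split; reflexivity.
  - simpl; repeat split; intros; f_equal; apply functional_extensionality; intro i;
      first [destruct (inp i) eqn:E | destruct (binp i) eqn:E]; auto; f_equal;
      first [apply (H i _ E) | apply (H0 i _ E)].
  - destruct H as [H1 [H2 H3]]. simpl; repeat split; intros; f_equal; auto.
Qed.

Lemma qSwap_qRen zs a b (X : QT) : qSwap zs a b X = qRen (sw zs a b) X.
Proof. apply (proj1 (proj1 qRen_props X)). Qed.

Lemma qRen_comp pi sg (X : QT) : qRen pi (qRen sg X) = qRen (fun ws w => pi ws (sg ws w)) X.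
Proof. apply (proj1 (proj2 (proj1 qRen_props X))). Qed.

Lemma qRen_id (X : QT) : qRen (fun _ w => w) X = X.
Proof. apply (proj2 (proj2 (proj1 qRen_props X))). Qed.

Ltac qSwap_by_renaming :=
  rewrite ?qSwap_qRen, ?qRen_comp; f_equal;
  apply functional_extensionality; intro; apply functional_extensionality; intro; swapv_brute.

Lemma qSwap_same zs a (X : QT) : qSwap zs a a X = X.
Proof. rewrite <- (qRen_id X) at 2. qSwap_by_renaming. Qed.

Lemma qSwap_comm zs a b (X : QT) : qSwap zs a b X = qSwap zs b a X.
Proof. qSwap_by_renaming. Qed.

Lemma qSwap_qSwap zs a b xs y x (X : QT) :
  qSwap zs a b (qSwap xs y x X) = qSwap xs (sw zs a b xs y) (sw zs a b xs x) (qSwap zs a b X).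
Proof. qSwap_by_renaming. Qed.

Lemma qSwap_cycle xs y y1 x (X : QT) : y <> y1 -> y <> x -> y1 <> x ->
  qSwap xs y y1 (qSwap xs y1 x X) = qSwap xs y x (qSwap xs y y1 X).
Proof. intros. qSwap_by_renaming. Qed.

Lemma qSwap_cycle' xs x y z (X : QT) : x <> y -> z <> x -> z <> y ->
  qSwap xs z x (qSwap xs y x X) = qSwap xs y x (qSwap xs z y X).
Proof. intros. qSwap_by_renaming. Qed.

(** * Small sets of variables *)

Definition small_set (S : var -> Prop) := lt_card {x : var | S x} var.

Lemma small_set_sub (S S' : var -> Prop) :
  (forall x, S x -> S' x) -> small_set S' -> small_set S.
Proof.
  intros H.
  apply lt_card_inj with (f := fun p : {x | S x} => exist S' (proj1_sig p) (H _ (proj2_sig p))).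
  intros [a1 p1] [a2 p2] E. simpl in E. inversion E; subst. f_equal; apply proof_irrelevance.
Qed.

Lemma small_set_avoid (S : var -> Prop) : small_set S -> exists x, ~ S x.
Proof.
  intros [_ Hn]. apply NNPP; intro H. apply Hn.
  exists (fun v => exist S v (NNPP _ (fun h => H (ex_intro _ v h)))).
  intros b1 b2 E. inversion E; auto.
Qed.

Lemma three_distinct_vars : exists a b c : var, a <> b /\ a <> c /\ b <> c.
Proof.
  destruct Hvar as [Hi _]. destruct (Hi nil) as [a _]. destruct (Hi (a :: nil)) as [b Hb].
  destruct (Hi (a :: b :: nil)) as [c Hc].
  exists a, b, c. simpl in *. repeat split; intro; subst; tauto.
Qed.

Lemma lt_card_bool : lt_card bool var.
Proof.
  destruct three_distinct_vars as [x [y [z [Hxy [Hxz Hyz]]]]]. split.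
  - exists (fun t : bool => if t then x else y). intros [] []; auto; intro; congruence.
  - intros [g Hg].
    destruct (g x) eqn:E1, (g y) eqn:E2, (g z) eqn:E3;
      first [ apply Hxy; apply Hg; congruence | apply Hxz; apply Hg; congruence
            | apply Hyz; apply Hg; congruence ].
Qed.

Lemma small_set_singleton (a : var) : small_set (fun x => x = a).
Proof.
  destruct three_distinct_vars as [x [y [_ [Hxy _]]]]. split.
  - exists (@proj1_sig _ _). intros [] [] E; simpl in E; subst; f_equal; apply proof_irrelevance.
  - intros [g Hg]. apply Hxy, Hg.
    destruct (g x) as [u pu], (g y) as [v pv]. subst. f_equal; apply proof_irrelevance.
Qed.

Lemma small_set_empty : small_set (fun _ => False).
Proof.
  destruct three_distinct_vars as [a _].
  apply small_set_sub with (S' := fun x => x = a); [tauto | apply small_set_singleton].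
Qed.

Lemma small_set_union (S1 S2 : var -> Prop) :
  small_set S1 -> small_set S2 -> small_set (fun x => S1 x \/ S2 x).
Proof.
  intros. apply small_set_sub with (S' := fun x => exists b : bool, (if b then S1 else S2) x).
  - intros x [h|h]; [exists true|exists false]; auto.
  - apply (proj2 Hvar). apply lt_card_bool. intros []; auto.
Qed.

Lemma small_set_preimage (S : var -> Prop) (f : var -> var) :
  (forall x y, f x = f y -> x = y) -> small_set S -> small_set (fun x => S (f x)).
Proof.
  intros Hf.
  apply lt_card_inj with (f := fun p : {x | S (f x)} => exist S (f (proj1_sig p)) (proj2_sig p)).
  intros [a1 p1] [a2 p2] E. simpl in E. inversion E as [E']. apply Hf in E'. subst.
  f_equal; apply proof_irrelevance.
Qed.

Lemma small_same_dom (I B C : Type) (inp : input I B) (inp' : input I C) :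
  (forall i, inp i = None <-> inp' i = None) -> small var inp -> small var inp'.
Proof.
  intros H. unfold small. apply lt_card_inj with
    (f := fun p : dom inp' => exist (fun i => inp i <> None) (proj1_sig p)
             (fun e => proj2_sig p (proj1 (H _) e))).
  intros [a1 p1] [a2 p2] E. simpl in E. inversion E; subst. f_equal; apply proof_irrelevance.
Qed.

Lemma small_map (I B C : Type) (inp : input I B) (f : B -> C) :
  small var (fun i => match inp i with Some x => Some (f x) | None => None end) <-> small var inp.
Proof. split; apply small_same_dom; intro i; destruct (inp i); simpl; split; intro; congruence. Qed.

Lemma qGood_qSwap_iff :
  (forall (X : QT) zs a b, qGood (qSwap zs a b X) <-> qGood X) /\
  (forall (A : QA) zs a b, qGoodAbs (qSwapAbs zs a b A) <-> qGoodAbs A).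
Proof.
  apply qterm_qabs_ind; intros; simpl; [tauto| |rewrite H; tauto].
  split; intros [H1 [H2 [H3 H4]]]; rewrite ?small_map in *;
    refine (conj _ (conj _ (conj _ _))); auto; intro i.
  - specialize (H3 i). destruct (inp i) eqn:E; auto. apply (H i _ E zs a b); auto.
  - specialize (H4 i). destruct (binp i) eqn:E; auto. apply (H0 i _ E zs a b); auto.
  - specialize (H3 i). destruct (inp i) eqn:E; auto. apply (H i _ E zs a b); auto.
  - specialize (H4 i). destruct (binp i) eqn:E; auto. apply (H0 i _ E zs a b); auto.
Qed.

Lemma qGood_qSwap zs a b (X : QT) : qGood (qSwap zs a b X) <-> qGood X.
Proof. apply (proj1 qGood_qSwap_iff). Qed.

Lemma small_qFree_gen :
  (forall X : QT, qGood X -> forall ws, small_set (fun z => qFree ws z X)) /\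
  (forall A : QA, qGoodAbs A -> forall ws, small_set (fun z => qFreeAbs ws z A)).
Proof.
  apply qterm_qabs_ind; intros; simpl in *.
  - apply small_set_sub with (S' := fun z => z = x); [intros z E; inversion E; auto|].
    apply small_set_singleton.
  - destruct H1 as [H1 [H2 [H3 H4]]].
    (* a union, indexed by the small domains, of small sets: regularity applies *)
    apply small_set_sub with (S' := fun z =>
      (exists i : dom inp, match inp (proj1_sig i) with Some X => qFree ws z X | None => False end) \/
      (exists i : dom binp,
         match binp (proj1_sig i) with Some A => qFreeAbs ws z A | None => False end)).
    + intros z [[i Hi]|[i Hi]].
      * left. destruct (inp i) eqn:E; [|contradiction].
        exists (exist _ i (ltac:(congruence) : inp i <> None)). simpl. rewrite E; auto.
      * right. destruct (binp i) eqn:E; [|contradiction].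
        exists (exist _ i (ltac:(congruence) : binp i <> None)). simpl. rewrite E; auto.
    + apply small_set_union; apply (proj2 Hvar); auto.
      * intros [i Hi]; simpl. specialize (H3 i). destruct (inp i) eqn:E.
        -- apply (H i _ E); auto.
        -- apply small_set_empty.
      * intros [i Hi]; simpl. specialize (H4 i). destruct (binp i) eqn:E.
        -- apply (H0 i _ E); auto.
        -- apply small_set_empty.
  - apply small_set_sub with (S' := fun z => qFree ws z X); [tauto | auto].
Qed.

Lemma small_qFree (X : QT) ws : qGood X -> small_set (fun z => qFree ws z X).
Proof. intros; apply (proj1 small_qFree_gen); auto. Qed.

Lemma small_qFreeAbs (A : QA) ws : qGoodAbs A -> small_set (fun z => qFreeAbs ws z A).
Proof. intros; apply (proj2 small_qFree_gen); auto. Qed.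

Ltac small_tac := repeat first
  [ apply small_set_union | apply small_set_singleton
  | apply small_qFree; assumption | apply small_qFreeAbs; assumption | assumption ].

(* Induction whose hypotheses hold for all iterated swaps of the immediate subterms,
   so that a bound variable can be renamed before a hypothesis is used. *)

Definition qSwaps (l : list (varsort * var * var)) (X : QT) :=
  fold_right (fun p Y => qSwap (fst (fst p)) (snd (fst p)) (snd p) Y) X l.
Definition qSwapsAbs (l : list (varsort * var * var)) (A : QA) :=
  fold_right (fun p B => qSwapAbs (fst (fst p)) (snd (fst p)) (snd p) B) A l.

Lemma qSwaps_qVar l xs x : exists x', qSwaps l (qV xs x) = qV xs x'.
Proof. induction l as [|p l [x' E]]; simpl; [eauto|]. rewrite E. simpl; eauto. Qed.

Lemma qSwaps_qOp l d inp binp : qSwaps l (qOp d inp binp) =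
  qOp d (fun i => match inp i with Some X => Some (qSwaps l X) | None => None end)
        (fun i => match binp i with Some A => Some (qSwapsAbs l A) | None => None end).
Proof.
  induction l as [|p l IH]; simpl.
  - f_equal; apply functional_extensionality; intro i; [destruct (inp i)|destruct (binp i)]; auto.
  - rewrite IH. simpl. f_equal; apply functional_extensionality; intro i;
      [destruct (inp i)|destruct (binp i)]; auto.
Qed.

Lemma qSwapsAbs_qAbs l xs x X : exists x', qSwapsAbs l (qAbs xs x X) = qAbs xs x' (qSwaps l X).
Proof. induction l as [|p l [x' E]]; simpl; [eauto|]. rewrite E. simpl; eauto. Qed.

Lemma qterm_qabs_swap_ind (P : QT -> Prop) (Q : QA -> Prop) :
  (forall xs x, P (qV xs x)) ->
  (forall d inp binp,
    (forall i X, inp i = Some X -> forall l, P (qSwaps l X)) ->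
    (forall i A, binp i = Some A -> forall l, Q (qSwapsAbs l A)) ->
    P (qOp d inp binp)) ->
  (forall xs x X, (forall l, P (qSwaps l X)) -> Q (qAbs xs x X)) ->
  (forall X, P X) /\ (forall A, Q A).
Proof.
  intros HV HO HA.
  assert (H : (forall X l, P (qSwaps l X)) /\ (forall A l, Q (qSwapsAbs l A))).
  { apply qterm_qabs_ind; intros.
    - destruct (qSwaps_qVar l xs x) as [x' E]; rewrite E; auto.
    - rewrite qSwaps_qOp. apply HO.
      + intros i X E l'. destruct (inp i) eqn:E'; [|discriminate]. inversion E; subst.
        unfold qSwaps; rewrite <- fold_right_app. apply (H i _ E').
      + intros i A E l'. destruct (binp i) eqn:E'; [|discriminate]. inversion E; subst.
        unfold qSwapsAbs; rewrite <- fold_right_app. apply (H0 i _ E').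
    - destruct (qSwapsAbs_qAbs l xs x X) as [x' E]; rewrite E. apply HA. intro l'.
      unfold qSwaps; rewrite <- fold_right_app. apply H. }
  split; intros; [apply (proj1 H X nil) | apply (proj2 H A nil)].
Qed.

(** * Parallel substitution on quasi-terms *)

Notation Rho := (varsort -> var -> QT).

(* The predicate from which [qPsubstAbs] chooses the new binder by epsilon. *)
Definition subst_avoids (rho : Rho) xs x (X : QT) (z : var) :=
  forall ws w, qFreeAbs ws w (qAbs xs x X) -> ~ qFree xs z (rho ws w).

Definition subst_binder (rho : Rho) xs x (X : QT) : var :=
  epsilon (inhabits x) (subst_avoids rho xs x X).

Lemma qPsubstAbs_qAbs (rho : Rho) xs x X :
  qPsubstAbs rho (qAbs xs x X) =
  qAbs xs (subst_binder rho xs x X) (qPsubst (upd rho xs x (qV xs (subst_binder rho xs x X))) X).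
Proof. reflexivity. Qed.

Lemma qPsubst_qOp (rho : Rho) d inp binp :
  qPsubst rho (qOp d inp binp) =
  qOp d (fun i => match inp i with Some X' => Some (qPsubst rho X') | None => None end)
        (fun i => match binp i with Some A => Some (qPsubstAbs rho A) | None => None end).
Proof. reflexivity. Qed.

Lemma subst_binder_avoids (rho : Rho) xs x X :
  (exists z, subst_avoids rho xs x X z) -> subst_avoids rho xs x X (subst_binder rho xs x X).
Proof. intros. unfold subst_binder. apply epsilon_spec; auto. Qed.

Lemma upd_same (rho : Rho) xs x Z : upd rho xs x Z xs x = Z.
Proof. unfold upd. rewrite eqdec_true; auto. Qed.

Lemma upd_other (rho : Rho) xs x Z ws w : (ws, w) <> (xs, x) -> upd rho xs x Z ws w = rho ws w.
Proof. intros; unfold upd. rewrite eqdec_false; auto. Qed.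

Ltac upd_cases ws w xs x :=
  destruct (classic ((ws, w) = (xs, x))) as [Eupd|Nupd];
  [inversion Eupd; subst; rewrite ?upd_same in * | rewrite ?upd_other in * by auto].

Lemma qPsubst_ext_gen :
  (forall (X : QT) (rho rho' : Rho), (forall ws w, qFree ws w X -> rho ws w = rho' ws w) ->
     qPsubst rho X = qPsubst rho' X) /\
  (forall (A : QA) (rho rho' : Rho), (forall ws w, qFreeAbs ws w A -> rho ws w = rho' ws w) ->
     qPsubstAbs rho A = qPsubstAbs rho' A).
Proof.
  apply qterm_qabs_ind; intros.
  - apply H; simpl; auto.
  - rewrite !qPsubst_qOp. f_equal; apply functional_extensionality; intro i.
    + destruct (inp i) eqn:E; auto. f_equal. apply (H i _ E).
      intros; apply H1; simpl; left; exists i; rewrite E; auto.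
    + destruct (binp i) eqn:E; auto. f_equal. apply (H0 i _ E).
      intros; apply H1; simpl; right; exists i; rewrite E; auto.
  - rewrite !qPsubstAbs_qAbs.
    assert (E : subst_binder rho xs x X = subst_binder rho' xs x X).
    { unfold subst_binder. apply epsilon_ext. intro z.
      split; intros Hz ws w Hw; [rewrite <- H0|rewrite H0]; auto. }
    rewrite E. f_equal. apply H. intros ws w Hw. upd_cases ws w xs x; auto.
    apply H0. simpl. auto.
Qed.

Lemma qPsubst_ext (X : QT) (rho rho' : Rho) :
  (forall ws w, qFree ws w X -> rho ws w = rho' ws w) -> qPsubst rho X = qPsubst rho' X.
Proof. apply (proj1 qPsubst_ext_gen). Qed.

Lemma qPsubst_qSwap_gen :
  (forall (X : QT) (rho : Rho) zs a b,
     qPsubst rho (qSwap zs a b X) = qPsubst (fun ws w => rho ws (sw zs a b ws w)) X) /\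
  (forall (A : QA) (rho : Rho) zs a b,
     qPsubstAbs rho (qSwapAbs zs a b A) = qPsubstAbs (fun ws w => rho ws (sw zs a b ws w)) A).
Proof.
  apply qterm_qabs_ind; intros.
  - reflexivity.
  - simpl qSwap. rewrite !qPsubst_qOp. f_equal; apply functional_extensionality; intro i.
    + destruct (inp i) eqn:E; auto. f_equal. apply (H i _ E).
    + destruct (binp i) eqn:E; auto. f_equal. apply (H0 i _ E).
  - change (qSwapAbs zs a b (qAbs xs x X)) with (qAbs xs (sw zs a b xs x) (qSwap zs a b X)).
    rewrite !qPsubstAbs_qAbs.
    assert (E : subst_binder rho xs (sw zs a b xs x) (qSwap zs a b X) =
                subst_binder (fun ws w => rho ws (sw zs a b ws w)) xs x X).
    { unfold subst_binder. apply epsilon_ext. intro z. unfold subst_avoids.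
      change (qAbs xs (sw zs a b xs x) (qSwap zs a b X)) with (qSwapAbs zs a b (qAbs xs x X)).
      split; intros Hz ws w Hw.
      - apply Hz. rewrite qFreeAbs_qSwapAbs, swapv_involutive. auto.
      - rewrite qFreeAbs_qSwapAbs in Hw. specialize (Hz _ _ Hw). rewrite swapv_involutive in Hz. auto. }
    rewrite E, H. f_equal. f_equal.
    apply functional_extensionality; intro ws; apply functional_extensionality; intro w.
    upd_cases ws w xs x; auto.
    rewrite !upd_other; auto. intro e. apply swapv_pair_inj in e. auto.
Qed.

Lemma qPsubst_qSwap (X : QT) (rho : Rho) zs a b :
  qPsubst rho (qSwap zs a b X) = qPsubst (fun ws w => rho ws (sw zs a b ws w)) X.
Proof. apply (proj1 qPsubst_qSwap_gen). Qed.

Lemma qFree_qPsubst_gen :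
  (forall (X : QT) (rho : Rho) ns n, qFree ns n (qPsubst rho X) ->
     exists ws w, qFree ws w X /\ qFree ns n (rho ws w)) /\
  (forall (A : QA) (rho : Rho) ns n, qFreeAbs ns n (qPsubstAbs rho A) ->
     exists ws w, qFreeAbs ws w A /\ qFree ns n (rho ws w)).
Proof.
  apply qterm_qabs_ind; intros.
  - exists xs, x; simpl; auto.
  - rewrite qPsubst_qOp in H1. simpl in H1. destruct H1 as [[i Hi]|[i Hi]].
    + destruct (inp i) eqn:E; [|contradiction]. destruct (H i _ E _ _ _ Hi) as [ws [w [H2 H3]]].
      exists ws, w; split; auto. simpl; left; exists i; rewrite E; auto.
    + destruct (binp i) eqn:E; [|contradiction]. destruct (H0 i _ E _ _ _ Hi) as [ws [w [H2 H3]]].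
      exists ws, w; split; auto. simpl; right; exists i; rewrite E; auto.
  - rewrite qPsubstAbs_qAbs in H0. simpl in H0. destruct H0 as [H1 H2].
    destruct (H _ _ _ H2) as [ws [w [H3 H4]]].
    upd_cases ws w xs x.
    + simpl in H4. congruence.
    + exists ws, w; simpl; auto.
Qed.

Lemma qFree_qPsubst (X : QT) (rho : Rho) ns n : qFree ns n (qPsubst rho X) ->
  exists ws w, qFree ws w X /\ qFree ns n (rho ws w).
Proof. apply (proj1 qFree_qPsubst_gen). Qed.

Lemma qGood_qPsubst_gen :
  (forall (X : QT) (rho : Rho), qGood X -> (forall ws w, qFree ws w X -> qGood (rho ws w)) ->
     qGood (qPsubst rho X)) /\
  (forall (A : QA) (rho : Rho), qGoodAbs A -> (forall ws w, qFreeAbs ws w A -> qGood (rho ws w)) ->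
     qGoodAbs (qPsubstAbs rho A)).
Proof.
  apply qterm_qabs_ind; intros.
  - apply H0; simpl; auto.
  - rewrite qPsubst_qOp. simpl in H1 |- *. destruct H1 as [H3 [H4 [H5 H6]]].
    rewrite !small_map. refine (conj H3 (conj H4 (conj _ _))); intro i.
    + specialize (H5 i). destruct (inp i) eqn:E; auto. apply (H i _ E); auto.
      intros; apply H2; simpl; left; exists i; rewrite E; auto.
    + specialize (H6 i). destruct (binp i) eqn:E; auto. apply (H0 i _ E); auto.
      intros; apply H2; simpl; right; exists i; rewrite E; auto.
  - rewrite qPsubstAbs_qAbs. simpl in *. apply H; auto. intros ws w Hw.
    upd_cases ws w xs x; simpl; auto.
Qed.

Lemma qGood_qPsubst (X : QT) (rho : Rho) : qGood X ->
  (forall ws w, qFree ws w X -> qGood (rho ws w)) -> qGood (qPsubst rho X).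
Proof. apply (proj1 qGood_qPsubst_gen). Qed.

Lemma qGoodAbs_qPsubstAbs (A : QA) (rho : Rho) : qGoodAbs A ->
  (forall ws w, qFreeAbs ws w A -> qGood (rho ws w)) -> qGoodAbs (qPsubstAbs rho A).
Proof. apply (proj2 qGood_qPsubst_gen). Qed.

(* Side conditions on a substitution, relative to the free variables [F] of the quasi-term
   it is applied to, which guarantee that admissible binders exist. *)

Definition qFV (X : QT) := fun ws w => qFree ws w X.
Definition qFVAbs (A : QA) := fun ws w => qFreeAbs ws w A.

Definition range_free (rho : Rho) (F : varsort -> var -> Prop) zs z :=
  exists ws w, F ws w /\ qFree zs z (rho ws w).
Definition small_range (rho : Rho) F := forall zs, small_set (range_free rho F zs).
Definition good_on (rho : Rho) (F : varsort -> var -> Prop) :=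
  forall ws w, F ws w -> qGood (rho ws w).

Lemma small_range_sub (rho : Rho) F G :
  (forall ws w, F ws w -> G ws w) -> small_range rho G -> small_range rho F.
Proof.
  intros H HG zs. apply small_set_sub with (S' := range_free rho G zs); auto.
  intros z [ws [w [H1 H2]]]; exists ws, w; auto.
Qed.

Lemma small_range_upd (rho : Rho) xs x X d :
  small_range rho (qFVAbs (qAbs xs x X)) -> small_range (upd rho xs x (qV xs d)) (qFV X).
Proof.
  intros H zs.
  apply small_set_sub with (S' := fun z => range_free rho (qFVAbs (qAbs xs x X)) zs z \/ z = d).
  - intros z [ws [w [H1 H2]]]. upd_cases ws w xs x.
    + simpl in H2. inversion H2; auto.
    + left. exists ws, w. split; auto. unfold qFVAbs; simpl; auto.
  - small_tac. apply H.
Qed.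

Lemma good_on_upd (rho : Rho) xs x X d :
  good_on rho (qFVAbs (qAbs xs x X)) -> good_on (upd rho xs x (qV xs d)) (qFV X).
Proof.
  intros H ws w Hw. upd_cases ws w xs x; simpl; auto.
  apply H. unfold qFVAbs; simpl; auto.
Qed.

Lemma small_range_qSwap (rho : Rho) F zs a b :
  small_range rho F -> small_range (fun ws w => qSwap zs a b (rho ws w)) F.
Proof.
  intros H ns. apply small_set_sub with (S' := fun z => range_free rho F ns (sw zs a b ns z)).
  - intros z [ws [w [H1 H2]]]. exists ws, w. split; auto. rewrite qFree_qSwap in H2; auto.
  - apply small_set_preimage; auto. intros; eapply swapv_inj; eauto.
Qed.

Lemma good_on_qSwap (rho : Rho) F zs a b :
  good_on rho F -> good_on (fun ws w => qSwap zs a b (rho ws w)) F.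
Proof. intros H ws w Hw. apply qGood_qSwap. auto. Qed.

Lemma subst_avoids_exists (rho : Rho) xs x X :
  small_range rho (qFVAbs (qAbs xs x X)) -> exists z, subst_avoids rho xs x X z.
Proof.
  intros H. destruct (small_set_avoid (H xs)) as [z Hz]. exists z. intros ws w Hw Hf. apply Hz.
  exists ws, w; split; auto.
Qed.

Lemma small_range_single (Y : QT) ys y F :
  (forall zs, small_set (fun z => F zs z)) -> qGood Y -> small_range (upd qV ys y Y) F.
Proof.
  intros HF GY zs. apply small_set_sub with (S' := fun z => F zs z \/ qFree zs z Y).
  - intros z [ws [w [H1 H2]]]. upd_cases ws w ys y; auto.
    simpl in H2. inversion H2; subst. auto.
  - small_tac. apply HF.
Qed.

Lemma qGood_upd_qVar (Y : QT) ys y ws w : qGood Y -> qGood (upd qV ys y Y ws w).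
Proof. intros GY. upd_cases ws w ys y; simpl; auto. Qed.

(** * Alpha-equivalence on quasi-terms *)

Lemma alpha_alphaAbs_ind (P : QT -> QT -> Prop) (P0 : QA -> QA -> Prop) :
  (forall xs x, P (qV xs x) (qV xs x)) ->
  (forall d inp inp' binp binp',
     (forall i, inp i = None <-> inp' i = None) ->
     (forall i X X', inp i = Some X -> inp' i = Some X' -> alpha X X' /\ P X X') ->
     (forall i, binp i = None <-> binp' i = None) ->
     (forall i A A', binp i = Some A -> binp' i = Some A' -> alphaAbs A A' /\ P0 A A') ->
     P (qOp d inp binp) (qOp d inp' binp')) ->
  (forall xs x x' X X' y, y <> x -> y <> x' -> ~ qFree xs y X -> ~ qFree xs y X' ->
     alpha (qSwap xs y x X) (qSwap xs y x' X') -> P (qSwap xs y x X) (qSwap xs y x' X') ->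
     P0 (qAbs xs x X) (qAbs xs x' X')) ->
  (forall X X', alpha X X' -> P X X') /\ (forall A A', alphaAbs A A' -> P0 A A').
Proof.
  intros HV HO HA.
  apply (@alpha_alphaAbs_dep_ind var varsort index bindex opsym
           (fun X X' _ => P X X') (fun A A' _ => P0 A A')); intros; auto.
  - apply HO; auto; intros; split; eauto.
  - eapply HA; eauto.
Qed.

Lemma match_option_none_iff (I B C D E : Type) (inp : I -> option B) (inp' : I -> option C)
  (f : B -> D) (g : C -> E) :
  (forall i, inp i = None <-> inp' i = None) ->
  forall i, (match inp i with Some x => Some (f x) | None => None end) = None <->
            (match inp' i with Some x => Some (g x) | None => None end) = None.
Proof.
  intros H i; specialize (H i); destruct (inp i), (inp' i); simpl; intuition congruence.
Qed.

Lemma alpha_qSwap_gen :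
  (forall X X' : QT, alpha X X' -> forall zs a b, alpha (qSwap zs a b X) (qSwap zs a b X')) /\
  (forall A A' : QA, alphaAbs A A' ->
     forall zs a b, alphaAbs (qSwapAbs zs a b A) (qSwapAbs zs a b A')).
Proof.
  apply alpha_alphaAbs_ind; intros.
  - constructor.
  - simpl. constructor.
    + apply match_option_none_iff; auto.
    + intros i X X' E1 E2. destruct (inp i) eqn:F1; [|discriminate].
      destruct (inp' i) eqn:F2; [|discriminate].
      inversion E1; inversion E2; subst. apply (H0 i _ _ F1 F2).
    + apply match_option_none_iff; auto.
    + intros i A A' E1 E2. destruct (binp i) eqn:F1; [|discriminate].
      destruct (binp' i) eqn:F2; [|discriminate].
      inversion E1; inversion E2; subst. apply (H2 i _ _ F1 F2).
  - simpl. apply alpha_Abs with (y := sw zs a b xs y).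
    + intro E; apply swapv_inj in E; auto.
    + intro E; apply swapv_inj in E; auto.
    + rewrite qFree_qSwap, swapv_involutive; auto.
    + rewrite qFree_qSwap, swapv_involutive; auto.
    + rewrite <- !qSwap_qSwap. auto.
Qed.

Lemma alpha_qSwap (X X' : QT) zs a b : alpha X X' -> alpha (qSwap zs a b X) (qSwap zs a b X').
Proof. intros; apply (proj1 alpha_qSwap_gen); auto. Qed.

Lemma alpha_qFree_gen :
  (forall X X' : QT, alpha X X' -> forall ns n, qFree ns n X <-> qFree ns n X') /\
  (forall A A' : QA, alphaAbs A A' -> forall ns n, qFreeAbs ns n A <-> qFreeAbs ns n A').
Proof.
  apply alpha_alphaAbs_ind; intros.
  - tauto.
  - simpl. split; intros [[i Hi]|[i Hi]]; [left|right|left|right]; exists i.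
    + destruct (inp i) eqn:E1; [|contradiction]. destruct (inp' i) eqn:E2.
      * apply (proj2 (H0 i _ _ E1 E2)); auto.
      * apply H in E2; congruence.
    + destruct (binp i) eqn:E1; [|contradiction]. destruct (binp' i) eqn:E2.
      * apply (proj2 (H2 i _ _ E1 E2)); auto.
      * apply H1 in E2; congruence.
    + destruct (inp' i) eqn:E1; [|contradiction]. destruct (inp i) eqn:E2.
      * apply (proj2 (H0 i _ _ E2 E1)); auto.
      * apply H in E2; congruence.
    + destruct (binp' i) eqn:E1; [|contradiction]. destruct (binp i) eqn:E2.
      * apply (proj2 (H2 i _ _ E2 E1)); auto.
      * apply H1 in E2; congruence.
  - simpl. assert (K : forall m, qFree ns m (qSwap xs y x X) <-> qFree ns m (qSwap xs y x' X'))
      by auto.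
    setoid_rewrite qFree_qSwap in K.
    destruct (classic (ns = xs)) as [es|nes].
    2: { specialize (K n). rewrite !swapv_other in K by congruence.
         split; intros [h1 h2]; split; try congruence; tauto. }
    subst ns.
    destruct (classic (n = y)) as [ey|ny]; [subst; tauto|].
    destruct (classic (n = x)) as [ex|nx]; destruct (classic (n = x')) as [ex'|nx'];
      try (subst; split; intros [h1 h2]; exfalso; apply h1; reflexivity).
    + subst n. split; intros [h1 h2]; [exfalso; apply h1; reflexivity|].
      specialize (K x). rewrite swapv_r, swapv_other in K by congruence. tauto.
    + subst n. split; intros [h1 h2]; [|exfalso; apply h1; reflexivity].
      specialize (K x'). rewrite swapv_r, swapv_other in K by congruence. tauto.
    + specialize (K n). rewrite !swapv_other in K by congruence.
      split; intros [h1 h2]; (split; [congruence|]); tauto.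
Qed.

Lemma alpha_qFree (X X' : QT) ns n : alpha X X' -> (qFree ns n X <-> qFree ns n X').
Proof. intros; apply (proj1 alpha_qFree_gen); auto. Qed.

Lemma alpha_qGood_gen :
  (forall X X' : QT, alpha X X' -> (qGood X <-> qGood X')) /\
  (forall A A' : QA, alphaAbs A A' -> (qGoodAbs A <-> qGoodAbs A')).
Proof.
  apply alpha_alphaAbs_ind; intros.
  - tauto.
  - simpl. split; intros [G1 [G2 [G3 G4]]]; refine (conj _ (conj _ (conj _ _))).
    + apply (small_same_dom _ H); auto.
    + apply (small_same_dom _ H1); auto.
    + intro i. specialize (G3 i). destruct (inp' i) eqn:E2; auto. destruct (inp i) eqn:E1.
      * apply (proj2 (H0 i _ _ E1 E2)); auto.
      * apply H in E1; congruence.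
    + intro i. specialize (G4 i). destruct (binp' i) eqn:E2; auto. destruct (binp i) eqn:E1.
      * apply (proj2 (H2 i _ _ E1 E2)); auto.
      * apply H1 in E1; congruence.
    + apply (small_same_dom (inp:=inp') inp); [intro i; specialize (H i); tauto|]; auto.
    + apply (small_same_dom (inp:=binp') binp); [intro i; specialize (H1 i); tauto|]; auto.
    + intro i. specialize (G3 i). destruct (inp i) eqn:E1; auto. destruct (inp' i) eqn:E2.
      * apply (proj2 (H0 i _ _ E1 E2)); auto.
      * apply H in E2; congruence.
    + intro i. specialize (G4 i). destruct (binp i) eqn:E1; auto. destruct (binp' i) eqn:E2.
      * apply (proj2 (H2 i _ _ E1 E2)); auto.
      * apply H1 in E2; congruence.
  - simpl. rewrite <- (qGood_qSwap xs y x X), <- (qGood_qSwap xs y x' X'). auto.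
Qed.

Lemma alpha_qGood (X X' : QT) : alpha X X' -> qGood X -> qGood X'.
Proof. intros H G. apply (proj1 alpha_qGood_gen _ _ H); auto. Qed.

Lemma alphaAbs_qGoodAbs (A A' : QA) : alphaAbs A A' -> qGoodAbs A -> qGoodAbs A'.
Proof. intros H G. apply (proj2 alpha_qGood_gen _ _ H); auto. Qed.

Lemma alpha_sym_gen :
  (forall X X' : QT, alpha X X' -> alpha X' X) /\ (forall A A' : QA, alphaAbs A A' -> alphaAbs A' A).
Proof.
  apply alpha_alphaAbs_ind; intros.
  - constructor.
  - constructor.
    + intro i; specialize (H i); tauto.
    + intros i X X' E1 E2. apply (H0 i _ _ E2 E1).
    + intro i; specialize (H1 i); tauto.
    + intros i A A' E1 E2. apply (H2 i _ _ E2 E1).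
  - apply alpha_Abs with (y := y); auto.
Qed.

Lemma alpha_sym (X X' : QT) : alpha X X' -> alpha X' X.
Proof. apply (proj1 alpha_sym_gen). Qed.

Lemma alphaAbs_sym (A A' : QA) : alphaAbs A A' -> alphaAbs A' A.
Proof. apply (proj2 alpha_sym_gen). Qed.

Lemma alpha_refl_gen :
  (forall X : QT, qGood X -> alpha X X) /\ (forall A : QA, qGoodAbs A -> alphaAbs A A).
Proof.
  apply qterm_qabs_swap_ind; intros.
  - constructor.
  - simpl in H1. destruct H1 as [_ [_ [G3 G4]]]. constructor; try tauto.
    + intros i X X' E1 E2. rewrite E1 in E2. inversion E2; subst. specialize (G3 i). rewrite E1 in G3.
      apply (H i _ E1 nil); auto.
    + intros i A A' E1 E2. rewrite E1 in E2. inversion E2; subst. specialize (G4 i). rewrite E1 in G4.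
      apply (H0 i _ E1 nil); auto.
  - simpl in H0. destruct (small_set_avoid (S := fun z => qFree xs z X \/ z = x)) as [y Hy];
      [small_tac|].
    apply alpha_Abs with (y := y); try tauto.
    apply (H ((xs, y, x) :: nil)). apply qGood_qSwap; auto.
Qed.

Lemma alpha_refl (X : QT) : qGood X -> alpha X X.
Proof. apply (proj1 alpha_refl_gen). Qed.

Lemma alphaAbs_refl (A : QA) : qGoodAbs A -> alphaAbs A A.
Proof. apply (proj2 alpha_refl_gen). Qed.

Lemma alphaAbs_qSwap_fresh_qAbs zs a b ws w (Z : QT) : qGood Z ->
  (forall zs a b, ~ qFree zs a Z -> ~ qFree zs b Z -> alpha (qSwap zs a b Z) Z) ->
  ~ qFreeAbs zs a (qAbs ws w Z) -> ~ qFreeAbs zs b (qAbs ws w Z) ->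
  alphaAbs (qSwapAbs zs a b (qAbs ws w Z)) (qAbs ws w Z).
Proof.
  intros GZ IH Ha Hb. simpl.
  destruct (classic (a = b)) as [eab|nab].
  { subst b. rewrite qSwap_same, swapv_same. apply alphaAbs_refl. simpl; auto. }
  destruct (small_set_avoid (S := fun z => qFree ws z Z \/ z = w \/ z = a \/ z = b)) as [y Hy];
    [small_tac|].
  destruct (swapv_cases zs a b ws w) as [[E1 E2]|[[E1 E2]|[E0 [E1 E2]]]]; rewrite E2.
  - inversion E1; subst ws w.
    assert (Fb : ~ qFree zs b Z) by (intro; apply Hb; simpl; split; auto; intro E; inversion E; auto).
    apply alpha_Abs with (y := y); try tauto.
    + rewrite qFree_qSwap, swapv_other; [tauto| |]; intro E; inversion E; tauto.
    + rewrite (qSwap_comm zs a b Z), qSwap_cycle by (intro; subst; tauto).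
      apply alpha_qSwap. apply IH; auto.
  - inversion E1; subst ws w.
    assert (Fa : ~ qFree zs a Z) by (intro; apply Ha; simpl; split; auto; intro E; inversion E; auto).
    apply alpha_Abs with (y := y); try tauto.
    + rewrite qFree_qSwap, swapv_other; [tauto| |]; intro E; inversion E; tauto.
    + rewrite qSwap_cycle by (intro; subst; tauto). apply alpha_qSwap. apply IH; auto.
  - assert (Fa : ~ qFree zs a Z) by (intro; apply Ha; simpl; split; auto).
    assert (Fb : ~ qFree zs b Z) by (intro; apply Hb; simpl; split; auto).
    apply alpha_Abs with (y := y); try tauto.
    + rewrite qFree_qSwap, swapv_other; [tauto| |]; intro E; inversion E; subst; tauto.
    + apply alpha_qSwap. apply IH; auto.
Qed.

Lemma alpha_qSwap_fresh_gen :
  (forall (X : QT) zs a b, qGood X -> ~ qFree zs a X -> ~ qFree zs b X ->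
     alpha (qSwap zs a b X) X) /\
  (forall (A : QA) zs a b, qGoodAbs A -> ~ qFreeAbs zs a A -> ~ qFreeAbs zs b A ->
     alphaAbs (qSwapAbs zs a b A) A).
Proof.
  apply qterm_qabs_ind; intros.
  - simpl in *. rewrite swapv_other by assumption. constructor.
  - simpl in H1. destruct H1 as [G1 [G2 [G3 G4]]]. simpl. constructor.
    + intro i; destruct (inp i); simpl; split; intro; congruence.
    + intros i X X' E1 E2. destruct (inp i) eqn:F; [|discriminate]. inversion E1; inversion E2; subst.
      specialize (G3 i); rewrite F in G3. apply (H i _ F); auto.
      * intro; apply H2; left; exists i; rewrite F; auto.
      * intro; apply H3; left; exists i; rewrite F; auto.
    + intro i; destruct (binp i); simpl; split; intro; congruence.
    + intros i A A' E1 E2. destruct (binp i) eqn:F; [|discriminate]. inversion E1; inversion E2; subst.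
      specialize (G4 i); rewrite F in G4. apply (H0 i _ F); auto.
      * intro; apply H2; right; exists i; rewrite F; auto.
      * intro; apply H3; right; exists i; rewrite F; auto.
  - simpl in H0. apply alphaAbs_qSwap_fresh_qAbs; auto.
Qed.

Lemma alpha_qSwap_fresh (X : QT) zs a b :
  qGood X -> ~ qFree zs a X -> ~ qFree zs b X -> alpha (qSwap zs a b X) X.
Proof. intros; apply (proj1 alpha_qSwap_fresh_gen); auto. Qed.

Lemma alpha_qOp_inv d inp binp (X' : QT) : alpha (qOp d inp binp) X' ->
  exists inp' binp', X' = qOp d inp' binp' /\
    (forall i, inp i = None <-> inp' i = None) /\
    (forall i X X', inp i = Some X -> inp' i = Some X' -> alpha X X') /\
    (forall i, binp i = None <-> binp' i = None) /\
    (forall i A A', binp i = Some A -> binp' i = Some A' -> alphaAbs A A').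
Proof. intros H; inversion H; subst. exists inp', binp'. auto 10. Qed.

Lemma alphaAbs_qAbs_inv xs x (X : QT) (A' : QA) : alphaAbs (qAbs xs x X) A' ->
  exists x' X' y, A' = qAbs xs x' X' /\ y <> x /\ y <> x' /\ ~ qFree xs y X /\ ~ qFree xs y X' /\
    alpha (qSwap xs y x X) (qSwap xs y x' X').
Proof. intros H; inversion H; subst. exists x', X', y. auto 10. Qed.

Lemma alphaAbs_trans_qAbs xs x (X0 : QT) : qGood X0 ->
  (forall zs a b X' X'', alpha (qSwap zs a b X0) X' -> alpha X' X'' -> alpha (qSwap zs a b X0) X'') ->
  forall A' A'', alphaAbs (qAbs xs x X0) A' -> alphaAbs A' A'' -> alphaAbs (qAbs xs x X0) A''.
Proof.
  intros G0 IH A' A'' H1 H2.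
  destruct (alphaAbs_qAbs_inv H1) as [x1 [X1 [y1 [-> [P1 [P2 [P3 [P4 P5]]]]]]]].
  destruct (alphaAbs_qAbs_inv H2) as [x2 [X2 [y2 [-> [Q1 [Q2 [Q3 [Q4 Q5]]]]]]]].
  assert (G1 : qGood X1).
  { apply (qGood_qSwap xs y1 x1). eapply alpha_qGood; eauto. apply qGood_qSwap; auto. }
  assert (G2 : qGood X2).
  { apply (qGood_qSwap xs y2 x2). eapply alpha_qGood; eauto. apply qGood_qSwap; auto. }
  (* Rename all three binders to one variable y fresh for everything in sight;
     the witnesses y1, y2 are then traded for y by swapping fresh names. *)
  destruct (small_set_avoid (S := fun z => qFree xs z X0 \/ qFree xs z X1 \/ qFree xs z X2 \/
     z = x \/ z = x1 \/ z = x2 \/ z = y1 \/ z = y2)) as [y Hy]; [small_tac|].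
  pose proof (IH xs y x) as T.
  assert (NE : y <> y1 /\ y <> y2 /\ y <> x /\ y <> x1 /\ y <> x2)
    by (repeat split; intro; subst; tauto).
  destruct NE as [N1 [N2 [N3 [N4 N5]]]].
  assert (h1 : alpha (qSwap xs y x X0) (qSwap xs y y1 (qSwap xs y1 x X0))).
  { rewrite qSwap_cycle by auto. apply alpha_sym, alpha_qSwap, alpha_qSwap_fresh; auto; tauto. }
  assert (h2 : alpha (qSwap xs y x X0) (qSwap xs y x1 (qSwap xs y y1 X1))).
  { rewrite <- qSwap_cycle by auto. apply (T _ _ h1). apply alpha_qSwap; auto. }
  assert (h3 : alpha (qSwap xs y x X0) (qSwap xs y x1 X1)).
  { apply (T _ _ h2). apply alpha_qSwap, alpha_qSwap_fresh; auto; tauto. }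
  assert (h4 : alpha (qSwap xs y x X0) (qSwap xs y y2 (qSwap xs y2 x1 X1))).
  { rewrite qSwap_cycle by auto. apply (T _ _ h3).
    apply alpha_sym, alpha_qSwap, alpha_qSwap_fresh; auto; tauto. }
  assert (h5 : alpha (qSwap xs y x X0) (qSwap xs y x2 (qSwap xs y y2 X2))).
  { rewrite <- qSwap_cycle by auto. apply (T _ _ h4). apply alpha_qSwap; auto. }
  apply alpha_Abs with (y := y); try tauto.
  apply (T _ _ h5). apply alpha_qSwap, alpha_qSwap_fresh; auto; tauto.
Qed.

Lemma alpha_trans_gen :
  (forall X : QT, qGood X -> forall X' X'', alpha X X' -> alpha X' X'' -> alpha X X'') /\
  (forall A : QA, qGoodAbs A -> forall A' A'', alphaAbs A A' -> alphaAbs A' A'' -> alphaAbs A A'').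
Proof.
  apply qterm_qabs_swap_ind; intros.
  - inversion H0; subst. auto.
  - simpl in H1. destruct H1 as [_ [_ [G3 G4]]].
    destruct (alpha_qOp_inv H2) as [inp' [binp' [-> [N1 [A1 [N2 A2]]]]]].
    destruct (alpha_qOp_inv H3) as [inp'' [binp'' [-> [N1' [A1' [N2' A2']]]]]].
    constructor.
    + intro i. rewrite N1. auto.
    + intros i X X'' E1 E3. destruct (inp' i) as [X'|] eqn:E2.
      * specialize (G3 i). rewrite E1 in G3. apply (H i _ E1 nil G3 X'); eauto.
      * apply N1' in E2. congruence.
    + intro i. rewrite N2. auto.
    + intros i A A'' E1 E3. destruct (binp' i) as [A'|] eqn:E2.
      * specialize (G4 i). rewrite E1 in G4. apply (H0 i _ E1 nil G4 A'); eauto.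
      * apply N2' in E2. congruence.
  - simpl in H0. apply alphaAbs_trans_qAbs with A'; auto.
    intros zs a b. apply (H ((zs, a, b) :: nil)), qGood_qSwap; auto.
Qed.

Lemma alpha_trans (X X' X'' : QT) : qGood X -> alpha X X' -> alpha X' X'' -> alpha X X''.
Proof. intros; eapply (proj1 alpha_trans_gen); eauto. Qed.

Lemma alphaAbs_trans (A A' A'' : QA) :
  qGoodAbs A -> alphaAbs A A' -> alphaAbs A' A'' -> alphaAbs A A''.
Proof. intros; eapply (proj2 alpha_trans_gen); eauto. Qed.

Lemma alphaEq_qGood (X X' : QT) : alphaEq X X' -> (qGood X <-> qGood X').
Proof.
  induction 1; try tauto.
  split; [apply alpha_qGood | apply alpha_qGood, alpha_sym]; auto.
Qed.

Lemma alphaAbsEq_qGoodAbs (A A' : QA) : alphaAbsEq A A' -> (qGoodAbs A <-> qGoodAbs A').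
Proof.
  induction 1; try tauto.
  split; [apply alphaAbs_qGoodAbs | apply alphaAbs_qGoodAbs, alphaAbs_sym]; auto.
Qed.

(* On good quasi-terms [alpha] is already an equivalence, hence coincides with its closure. *)
Lemma alphaEq_alpha (X X' : QT) : alphaEq X X' -> qGood X -> alpha X X'.
Proof.
  induction 1 as [| |X X' H IH|X Y Z H1 IH1 H2 IH2]; intros G.
  - auto.
  - apply alpha_refl; auto.
  - apply alpha_sym, IH. apply (alphaEq_qGood H); auto.
  - apply alpha_trans with Y; auto. apply IH2. apply (alphaEq_qGood H1); auto.
Qed.

Lemma alphaAbsEq_alphaAbs (A A' : QA) : alphaAbsEq A A' -> qGoodAbs A -> alphaAbs A A'.
Proof.
  induction 1 as [| |A A' H IH|A B C H1 IH1 H2 IH2]; intros G.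
  - auto.
  - apply alphaAbs_refl; auto.
  - apply alphaAbs_sym, IH. apply (alphaAbsEq_qGoodAbs H); auto.
  - apply alphaAbs_trans with B; auto. apply IH2. apply (alphaAbsEq_qGoodAbs H1); auto.
Qed.

Lemma alphaAbs_qAbs (X X' : QT) xs x :
  alpha X X' -> qGood X -> alphaAbs (qAbs xs x X) (qAbs xs x X').
Proof.
  intros H G. destruct (small_set_avoid (S := fun z => qFree xs z X \/ z = x)) as [y Hy]; [small_tac|].
  apply alpha_Abs with (y := y); try tauto.
  - rewrite <- (alpha_qFree xs y H). tauto.
  - apply alpha_qSwap; auto.
Qed.

Notation TM := (term var varsort index bindex opsym).
Notation AB := (abs var varsort index bindex opsym).

Lemma rep_spec (t : TM) : proj1_sig t = alphaEq (rep t).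
Proof. unfold rep. destruct (constructive_indefinite_description _ _) as [X HX]. exact HX. Qed.

Lemma repAbs_spec (t : AB) : proj1_sig t = alphaAbsEq (repAbs t).
Proof. unfold repAbs. destruct (constructive_indefinite_description _ _) as [A HA]. exact HA. Qed.

Lemma term_eq (t t' : TM) : proj1_sig t = proj1_sig t' -> t = t'.
Proof. destruct t, t'; simpl; intro; subst; f_equal; apply proof_irrelevance. Qed.

Lemma abs_eq (t t' : AB) : proj1_sig t = proj1_sig t' -> t = t'.
Proof. destruct t, t'; simpl; intro; subst; f_equal; apply proof_irrelevance. Qed.

Lemma alphaEq_rep_cls (X : QT) : alphaEq X (rep (cls X)).
Proof. change (proj1_sig (cls X) (rep (cls X))). rewrite rep_spec. apply rst_refl. Qed.

Lemma alphaAbsEq_repAbs_clsAbs (A : QA) : alphaAbsEq A (repAbs (clsAbs A)).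
Proof. change (proj1_sig (clsAbs A) (repAbs (clsAbs A))). rewrite repAbs_spec. apply rst_refl. Qed.

Lemma cls_rep (t : TM) : cls (rep t) = t.
Proof. apply term_eq. symmetry; apply rep_spec. Qed.

Lemma clsAbs_repAbs (t : AB) : clsAbs (repAbs t) = t.
Proof. apply abs_eq. symmetry; apply repAbs_spec. Qed.

Lemma cls_eq (X X' : QT) : alphaEq X X' -> cls X = cls X'.
Proof.
  intro H. apply term_eq. simpl. apply functional_extensionality; intro Z.
  apply propositional_extensionality. split; intro K.
  - eapply rst_trans; [apply rst_sym; exact H | exact K].
  - eapply rst_trans; [exact H | exact K].
Qed.

Lemma clsAbs_eq (A A' : QA) : alphaAbsEq A A' -> clsAbs A = clsAbs A'.
Proof.
  intro H. apply abs_eq. simpl. apply functional_extensionality; intro Z.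
  apply propositional_extensionality. split; intro K.
  - eapply rst_trans; [apply rst_sym; exact H | exact K].
  - eapply rst_trans; [exact H | exact K].
Qed.

Lemma good_cls (X : QT) : good (cls X) <-> qGood X.
Proof. unfold good. symmetry. apply alphaEq_qGood, alphaEq_rep_cls. Qed.

Lemma goodAbs_clsAbs (A : QA) : goodAbs (clsAbs A) <-> qGoodAbs A.
Proof. unfold goodAbs. symmetry. apply alphaAbsEq_qGoodAbs, alphaAbsEq_repAbs_clsAbs. Qed.

Lemma cls_qOp d (inp : input index QT) (binp : input bindex QA) :
  (forall i, match inp i with Some X => qGood X | None => True end) ->
  (forall i, match binp i with Some A => qGoodAbs A | None => True end) ->
  cls (qOp d inp binp) = Op d (lift (@cls _ _ _ _ _) inp) (lift (@clsAbs _ _ _ _ _) binp).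
Proof.
  intros G1 G2. unfold Op. apply cls_eq, rst_step. constructor.
  - intro i. unfold lift. destruct (inp i); simpl; split; intro; congruence.
  - intros i X X' E1 E2. unfold lift in E2. rewrite E1 in E2. inversion E2; subst.
    specialize (G1 i); rewrite E1 in G1. apply alphaEq_alpha; auto. apply alphaEq_rep_cls.
  - intro i. unfold lift. destruct (binp i); simpl; split; intro; congruence.
  - intros i A A' E1 E2. unfold lift in E2. rewrite E1 in E2. inversion E2; subst.
    specialize (G2 i); rewrite E1 in G2. apply alphaAbsEq_alphaAbs; auto. apply alphaAbsEq_repAbs_clsAbs.
Qed.

Lemma clsAbs_qAbs xs x (X : QT) : qGood X -> clsAbs (qAbs xs x X) = Abs xs x (cls X).
Proof.
  intro G. unfold Abs. apply clsAbs_eq, rst_step, alphaAbs_qAbs; auto.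
  apply alphaEq_alpha; auto. apply alphaEq_rep_cls.
Qed.

(** * Interpretation of quasi-terms in an FS model *)

Section Model.
Variables (TT AA : Type)
  (VAR : varsort -> var -> TT)
  (OP : opsym -> input index TT -> input bindex AA -> TT)
  (ABS : varsort -> var -> TT -> AA)
  (FRESH : varsort -> var -> TT -> Prop)
  (FRESHABS : varsort -> var -> AA -> Prop)
  (substT : TT -> TT -> var -> varsort -> TT)
  (substA : AA -> TT -> var -> varsort -> AA).
Hypothesis HM : FSModel VAR OP ABS FRESH FRESHABS substT substA.

Fixpoint qinterp (X : QT) : TT :=
  match X with
  | qVar _ _ _ xs x => VAR xs x
  | qOp d inp binp =>
      OP d (fun i => match inp i with Some X' => Some (qinterp X') | None => None end)
           (fun i => match binp i with Some A => Some (qinterpAbs A) | None => None end)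
  end
with qinterpAbs (A : QA) : AA :=
  match A with qAbs xs x X => ABS xs x (qinterp X) end.

Lemma qinterp_FRESH_gen :
  (forall X : QT, qGood X -> forall ys y, ~ qFree ys y X -> FRESH ys y (qinterp X)) /\
  (forall A : QA, qGoodAbs A -> forall ys y, ~ qFreeAbs ys y A -> FRESHABS ys y (qinterpAbs A)).
Proof.
  apply qterm_qabs_ind; intros; simpl in *.
  - apply (F1 HM). intro E; apply H0; inversion E; auto.
  - destruct H1 as [H1 [H4 [H5 H6]]]. apply (F2 HM); try (apply small_map; auto).
    + intros i a E. specialize (H5 i). destruct (inp i) eqn:E'; inversion E; subst.
      apply (H i _ E'); auto. intro; apply H2; left; exists i; rewrite E'; auto.
    + intros i a E. specialize (H6 i). destruct (binp i) eqn:E'; inversion E; subst.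
      apply (H0 i _ E'); auto. intro; apply H2; right; exists i; rewrite E'; auto.
  - apply (F3 HM). destruct (classic ((ys, y) = (xs, x))) as [|N]; auto.
    right. apply H; auto.
Qed.

Lemma qinterp_FRESH (X : QT) ys y : qGood X -> ~ qFree ys y X -> FRESH ys y (qinterp X).
Proof. intros; apply (proj1 qinterp_FRESH_gen); auto. Qed.

Lemma qinterpAbs_FRESHABS (A : QA) ys y :
  qGoodAbs A -> ~ qFreeAbs ys y A -> FRESHABS ys y (qinterpAbs A).
Proof. intros; apply (proj2 qinterp_FRESH_gen); auto. Qed.

Definition vacuous_subst_prop (X : QT) :=
  forall ks k ys y, ~ qFree ys y X -> substT (qinterp X) (VAR ks k) y ys = qinterp X.
Definition vacuous_substAbs_prop (A : QA) :=
  forall ks k ys y, ~ qFreeAbs ys y A -> substA (qinterpAbs A) (VAR ks k) y ys = qinterpAbs A.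
Definition swap_subst_prop (X : QT) :=
  forall xs y x, ~ qFree xs y X -> qinterp (qSwap xs y x X) = substT (qinterp X) (VAR xs y) x xs.
Definition swap_substAbs_prop (A : QA) :=
  forall xs y x, ~ qFreeAbs xs y A ->
    qinterpAbs (qSwapAbs xs y x A) = substA (qinterpAbs A) (VAR xs y) x xs.

Section AbstractionStep.
Variable Z : QT.
Hypothesis GZ : qGood Z.
Hypothesis IH : forall zs a b, vacuous_subst_prop (qSwap zs a b Z) /\ swap_subst_prop (qSwap zs a b Z).

Lemma swap_subst_body : swap_subst_prop Z.
Proof.
  intros xs y x. pose proof (proj2 (IH xs y y)) as H. rewrite qSwap_same in H. apply H.
Qed.

Lemma ABS_rename_bound ws w z :
  ~ qFree ws z Z -> ABS ws w (qinterp Z) = ABS ws z (qinterp (qSwap ws z w Z)).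
Proof.
  intros Hz. rewrite (R2 HM) with (y := z) by (apply qinterp_FRESH; auto).
  rewrite swap_subst_body; auto.
Qed.

Lemma vacuous_substAbs_qAbs ws w : vacuous_substAbs_prop (qAbs ws w Z).
Proof.
  intros ks k ys y Hy. simpl.
  destruct (small_set_avoid (S := fun z => qFree ws z Z \/ z = w \/ z = y \/ z = k)) as [z Hz];
    [small_tac|].
  rewrite (ABS_rename_bound _ _ z) by tauto.
  rewrite (S3 HM) by (try apply (F1 HM); intro E; inversion E; tauto).
  f_equal. apply (proj1 (IH ws z w)).
  rewrite qFree_qSwap.
  destruct (swapv_cases ws z w ys y) as [[E1 E2]|[[E1 E2]|[_ [E1 E2]]]]; rewrite E2.
  - exfalso; apply Hz; right; right; left; inversion E1; auto.
  - inversion E1; subst. tauto.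
  - intro Hf; apply Hy. simpl. split; [congruence | auto].
Qed.

Lemma swap_substAbs_qAbs ws w : swap_substAbs_prop (qAbs ws w Z).
Proof.
  intros xs y x Hy. simpl.
  destruct (classic (y = x)) as [->|Nxy].
  { rewrite qSwap_same, swapv_same. symmetry. apply vacuous_substAbs_qAbs; auto. }
  destruct (swapv_cases xs y x ws w) as [[E1 E2]|[[E1 E2]|[E0 [E1 E2]]]]; rewrite E2.
  - (* the bound variable is [y]: rename it to a fresh [z] first *)
    inversion E1; subst ws w.
    destruct (small_set_avoid (S := fun z => qFree xs z Z \/ z = x \/ z = y)) as [z Hz]; [small_tac|].
    rewrite (ABS_rename_bound _ _ z) by tauto.
    rewrite (S3 HM) by (try apply (F1 HM); intro E; inversion E; tauto).
    rewrite <- (proj2 (IH xs z y)) by (rewrite qFree_qSwap, swapv_r; tauto).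
    rewrite (R2 HM) with (y := z)
      by (apply qinterp_FRESH; [apply qGood_qSwap; auto|];
          rewrite qFree_qSwap, swapv_other; [tauto| |]; intro E; inversion E; tauto).
    rewrite <- (proj2 (IH xs y x))
      by (rewrite qFree_qSwap, swapv_other; [tauto| |]; intro E; inversion E; tauto).
    rewrite qSwap_cycle' by (intro; subst; tauto). reflexivity.
  - inversion E1; subst ws w.
    change (ABS xs x (qinterp Z)) with (qinterpAbs (qAbs xs x Z)).
    rewrite vacuous_substAbs_qAbs by (simpl; tauto). simpl.
    assert (Fy : ~ qFree xs y Z) by (intro Hf; apply Hy; simpl; split; auto; congruence).
    rewrite (R2 HM) with (x := x) (y := y) by (apply qinterp_FRESH; auto).
    rewrite swap_subst_body; auto.
  - rewrite (S3 HM) by (auto; apply (F1 HM); auto).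
    rewrite swap_subst_body; auto. intro Hf; apply Hy; simpl; split; auto.
Qed.

End AbstractionStep.

Lemma qinterp_subst_props :
  (forall X : QT, qGood X -> vacuous_subst_prop X /\ swap_subst_prop X) /\
  (forall A : QA, qGoodAbs A -> vacuous_substAbs_prop A /\ swap_substAbs_prop A).
Proof.
  apply qterm_qabs_swap_ind; intros.
  - split; [intros ks k ys y Hy | intros zs a b Hy]; simpl.
    + apply (S1b HM). intro E; apply Hy; simpl; auto.
    + destruct (swapv_cases zs a b xs x) as [[E1 E2]|[[E1 E2]|[_ [E1 E2]]]]; rewrite E2.
      * exfalso; apply Hy; simpl; auto.
      * inversion E1; subst. rewrite (S1a HM); auto.
      * rewrite (S1b HM); auto.
  - destruct H1 as [H1 [H2 [H3 H4]]].
    split; [intros ks k ys y Hy | intros zs a b Hy]; simpl; rewrite (S2 HM) by (apply small_map; auto);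
      f_equal; apply functional_extensionality; intro i; unfold lift.
    + specialize (H3 i). destruct (inp i) eqn:E; simpl; auto. f_equal.
      apply (proj1 (H i _ E nil H3)). intro; apply Hy; left; exists i; rewrite E; auto.
    + specialize (H4 i). destruct (binp i) eqn:E; simpl; auto. f_equal.
      apply (proj1 (H0 i _ E nil H4)). intro; apply Hy; right; exists i; rewrite E; auto.
    + specialize (H3 i). destruct (inp i) eqn:E; simpl; auto. f_equal.
      apply (proj2 (H i _ E nil H3)). intro; apply Hy; left; exists i; rewrite E; auto.
    + specialize (H4 i). destruct (binp i) eqn:E; simpl; auto. f_equal.
      apply (proj2 (H0 i _ E nil H4)). intro; apply Hy; right; exists i; rewrite E; auto.
  - simpl in H0.
    assert (IH : forall zs a b, vacuous_subst_prop (qSwap zs a b X) /\ swap_subst_prop (qSwap zs a b X)).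
    { intros zs a b. apply (H ((zs, a, b) :: nil)), qGood_qSwap; auto. }
    split; [apply vacuous_substAbs_qAbs | apply swap_substAbs_qAbs]; auto.
Qed.

Lemma qinterp_qSwap (X : QT) xs y x : qGood X -> ~ qFree xs y X ->
  qinterp (qSwap xs y x X) = substT (qinterp X) (VAR xs y) x xs.
Proof. intros G. apply (proj2 (proj1 qinterp_subst_props X G)). Qed.

Lemma qinterp_qSwap_fresh (X : QT) xs c a : qGood X -> ~ qFree xs c X -> ~ qFree xs a X ->
  qinterp (qSwap xs c a X) = qinterp X.
Proof. intros G Hc Ha. rewrite qinterp_qSwap; auto. apply (proj1 qinterp_subst_props); auto. Qed.

Lemma qinterp_qPsubst_congr_gen :
  (forall (X : QT) (rho rho' : Rho),
    (forall ws w, qFree ws w X -> qinterp (rho ws w) = qinterp (rho' ws w) /\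
        (forall ns n, qFree ns n (rho ws w) <-> qFree ns n (rho' ws w))) ->
    qinterp (qPsubst rho X) = qinterp (qPsubst rho' X)) /\
  (forall (A : QA) (rho rho' : Rho),
    (forall ws w, qFreeAbs ws w A -> qinterp (rho ws w) = qinterp (rho' ws w) /\
        (forall ns n, qFree ns n (rho ws w) <-> qFree ns n (rho' ws w))) ->
    qinterpAbs (qPsubstAbs rho A) = qinterpAbs (qPsubstAbs rho' A)).
Proof.
  apply qterm_qabs_ind; intros.
  - apply H; simpl; auto.
  - rewrite !qPsubst_qOp. simpl. f_equal; apply functional_extensionality; intro i.
    + destruct (inp i) eqn:E; auto. f_equal. apply (H i _ E).
      intros; apply H1; simpl; left; exists i; rewrite E; auto.
    + destruct (binp i) eqn:E; auto. f_equal. apply (H0 i _ E).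
      intros; apply H1; simpl; right; exists i; rewrite E; auto.
  - rewrite !qPsubstAbs_qAbs.
    assert (E : subst_binder rho xs x X = subst_binder rho' xs x X).
    { unfold subst_binder. apply epsilon_ext. intro z. split; intros Hz ws w Hw.
      - rewrite <- (proj2 (H0 _ _ Hw)). auto.
      - rewrite (proj2 (H0 _ _ Hw)). auto. }
    rewrite E. simpl. f_equal. apply H. intros ws w Hw. upd_cases ws w xs x.
    + split; tauto.
    + apply H0. simpl. split; auto.
Qed.

Lemma qinterp_qPsubst_congr (X : QT) (rho rho' : Rho) :
  (forall ws w, qFree ws w X -> qinterp (rho ws w) = qinterp (rho' ws w) /\
      (forall ns n, qFree ns n (rho ws w) <-> qFree ns n (rho' ws w))) ->
  qinterp (qPsubst rho X) = qinterp (qPsubst rho' X).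
Proof. apply (proj1 qinterp_qPsubst_congr_gen). Qed.

Definition swap_qPsubst_prop (X : QT) := forall (rho : Rho) zs a b,
  good_on rho (qFV X) -> small_range rho (qFV X) ->
  qinterp (qSwap zs a b (qPsubst rho X)) = qinterp (qPsubst (fun ws w => qSwap zs a b (rho ws w)) X).
Definition swap_qPsubstAbs_prop (A : QA) := forall (rho : Rho) zs a b,
  good_on rho (qFVAbs A) -> small_range rho (qFVAbs A) ->
  qinterpAbs (qSwapAbs zs a b (qPsubstAbs rho A)) =
  qinterpAbs (qPsubstAbs (fun ws w => qSwap zs a b (rho ws w)) A).

Section BinderIrrelevance.
Variables (X : QT) (rho : Rho) (xs : varsort) (x : var).
Hypothesis GX : qGood X.
Hypothesis SX : swap_qPsubst_prop X.
Hypothesis Hgood : good_on rho (qFVAbs (qAbs xs x X)).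
Hypothesis Hsmall : small_range rho (qFVAbs (qAbs xs x X)).

Lemma ABS_qPsubst_binder_neq c d :
  subst_avoids rho xs x X c -> subst_avoids rho xs x X d -> c <> d ->
  ABS xs d (qinterp (qPsubst (upd rho xs x (qV xs d)) X)) =
  ABS xs c (qinterp (qPsubst (upd rho xs x (qV xs c)) X)).
Proof.
  intros Ac Ad Ncd.
  set (Bd := qPsubst (upd rho xs x (qV xs d)) X).
  assert (Gd : qGood Bd) by (apply qGood_qPsubst; auto; apply good_on_upd; auto).
  assert (Fc : ~ qFree xs c Bd).
  { intro Hf. destruct (qFree_qPsubst _ _ _ _ Hf) as [ws [w [H1 H2]]]. upd_cases ws w xs x.
    - simpl in H2. inversion H2; auto.
    - apply (Ac ws w); auto. simpl; auto. }
  rewrite (R2 HM) with (x := d) (y := c) by (apply qinterp_FRESH; auto).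
  rewrite <- qinterp_qSwap by auto. unfold Bd.
  rewrite SX by (first [apply good_on_upd | apply small_range_upd]; auto).
  f_equal. apply qinterp_qPsubst_congr. intros ws w Hw. upd_cases ws w xs x.
  - simpl. rewrite swapv_r. split; tauto.
  - assert (HA : qFreeAbs ws w (qAbs xs x X)) by (simpl; auto).
    split.
    + apply qinterp_qSwap_fresh; auto; first [apply (Ac ws w HA) | apply (Ad ws w HA)].
    + intros. apply qFree_qSwap_fresh; first [apply (Ac ws w HA) | apply (Ad ws w HA)].
Qed.

Lemma ABS_qPsubst_binder a b :
  subst_avoids rho xs x X a -> subst_avoids rho xs x X b ->
  ABS xs a (qinterp (qPsubst (upd rho xs x (qV xs a)) X)) =
  ABS xs b (qinterp (qPsubst (upd rho xs x (qV xs b)) X)).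
Proof.
  intros Aa Ab.
  destruct (small_set_avoid (S := fun z => range_free rho (qFVAbs (qAbs xs x X)) xs z \/ z = a \/ z = b))
    as [c Hc]; [small_tac; apply Hsmall|].
  assert (Ac : subst_avoids rho xs x X c).
  { intros ws w Hw Hf. apply Hc. left. exists ws, w. auto. }
  rewrite (ABS_qPsubst_binder_neq Ac Aa), (ABS_qPsubst_binder_neq Ac Ab) by (intro; subst; tauto).
  reflexivity.
Qed.

End BinderIrrelevance.

Lemma qinterp_qSwap_qPsubst_gen :
  (forall X : QT, qGood X -> swap_qPsubst_prop X) /\
  (forall A : QA, qGoodAbs A -> swap_qPsubstAbs_prop A).
Proof.
  apply qterm_qabs_ind; unfold swap_qPsubst_prop, swap_qPsubstAbs_prop; intros.
  - reflexivity.
  - simpl in H1. destruct H1 as [H5 [H6 [H7 H8]]].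
    rewrite !qPsubst_qOp. simpl. f_equal; apply functional_extensionality; intro i.
    + specialize (H7 i). destruct (inp i) eqn:E; auto. simpl. f_equal. apply (H i _ E); auto.
      * intros ws w Hw; apply H2; simpl; left; exists i; rewrite E; auto.
      * apply small_range_sub with (G := qFV (qOp d inp binp)); auto.
        intros ws w Hw; simpl; left; exists i; rewrite E; auto.
    + specialize (H8 i). destruct (binp i) eqn:E; auto. simpl. f_equal. apply (H0 i _ E); auto.
      * intros ws w Hw; apply H2; simpl; right; exists i; rewrite E; auto.
      * apply small_range_sub with (G := qFV (qOp d inp binp)); auto.
        intros ws w Hw; simpl; right; exists i; rewrite E; auto.
  - simpl in H0. rewrite !qPsubstAbs_qAbs. simpl.
    rewrite H by (first [assumption | apply good_on_upd | apply small_range_upd]; auto).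
    set (sg := fun ws w => qSwap zs a b (rho ws w)).
    set (z := subst_binder rho xs x X).
    assert (EU : (fun ws w => qSwap zs a b (upd rho xs x (qV xs z) ws w)) =
                 upd sg xs x (qV xs (sw zs a b xs z))).
    { apply functional_extensionality; intro ws; apply functional_extensionality; intro w.
      upd_cases ws w xs x; reflexivity. }
    rewrite EU. apply ABS_qPsubst_binder; auto.
    + exact (H H0).
    + apply good_on_qSwap; auto.
    + apply small_range_qSwap; auto.
    + intros ws w Hw Hf. unfold sg in Hf. rewrite qFree_qSwap, swapv_involutive in Hf.
      apply (subst_binder_avoids (subst_avoids_exists H2) Hw Hf).
    + apply subst_binder_avoids, subst_avoids_exists, small_range_qSwap; auto.
Qed.

Definition subst_lemma_prop (X : QT) := forall (Y : QT) ys y, qGood X -> qGood Y ->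
  qinterp (qSubst X Y y ys) = substT (qinterp X) (qinterp Y) y ys.
Definition subst_lemmaAbs_prop (A : QA) := forall (Y : QT) ys y, qGoodAbs A -> qGood Y ->
  qinterpAbs (qSubstAbs A Y y ys) = substA (qinterpAbs A) (qinterp Y) y ys.

Lemma subst_lemma_qAbs xs x X :
  (forall zs a b, subst_lemma_prop (qSwap zs a b X)) -> subst_lemmaAbs_prop (qAbs xs x X).
Proof.
  intros IH Y ys y GA GY. simpl in GA. unfold qSubstAbs, qSubst in *.
  set (rho := upd qV ys y Y).
  assert (Hgood : good_on rho (qFVAbs (qAbs xs x X))) by (intros ws w' _; apply qGood_upd_qVar; auto).
  assert (Hsmall : small_range rho (qFVAbs (qAbs xs x X))).
  { apply small_range_single; auto. intro zs. apply small_qFreeAbs. simpl; auto. }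
  (* a binder [w] avoiding everything lets the substitution go under the abstraction *)
  destruct (small_set_avoid (S := fun w =>
      range_free rho (qFVAbs (qAbs xs x X)) xs w \/ qFree xs w Y \/ w = y \/ qFree xs w X))
    as [w Hw]; [small_tac; apply Hsmall|].
  assert (Aw : subst_avoids rho xs x X w).
  { intros ws w' Hw' Hf. apply Hw. left. exists ws, w'. auto. }
  rewrite qPsubstAbs_qAbs. simpl.
  rewrite (ABS_qPsubst_binder GA (proj1 qinterp_qSwap_qPsubst_gen X GA) Hgood Hsmall
             (subst_binder_avoids (subst_avoids_exists Hsmall)) Aw).
  assert (E : qPsubst (upd rho xs x (qV xs w)) X = qPsubst rho (qSwap xs w x X)).
  { rewrite qPsubst_qSwap. apply qPsubst_ext. intros ws w' Hf. upd_cases ws w' xs x.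
    - rewrite swapv_r. unfold rho. rewrite upd_other; auto. intro e; inversion e; subst; tauto.
    - rewrite swapv_other; auto. intro e; inversion e; subst; tauto. }
  rewrite E. change (qPsubst rho (qSwap xs w x X)) with (qSubst (qSwap xs w x X) Y y ys).
  rewrite (IH xs w x Y ys y) by (try apply qGood_qSwap; auto).
  rewrite <- (S3 HM) by (try apply qinterp_FRESH; auto; intro e; inversion e; subst; tauto).
  f_equal. rewrite qinterp_qSwap by (auto; tauto). symmetry. apply (R2 HM).
  apply qinterp_FRESH; auto. tauto.
Qed.

Lemma qinterp_subst_lemma :
  (forall X : QT, subst_lemma_prop X) /\ (forall A : QA, subst_lemmaAbs_prop A).
Proof.
  apply qterm_qabs_swap_ind; intros.
  - intros Y ys y _ GY. unfold qSubst. simpl. destruct (classic ((xs, x) = (ys, y))) as [e|n].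
    + inversion e; subst. rewrite upd_same, (S1a HM); auto.
    + rewrite upd_other, (S1b HM); auto.
  - intros Y ys y GX GY. simpl in GX. destruct GX as [Sm1 [Sm2 [G1 G2]]].
    unfold qSubst. rewrite qPsubst_qOp. simpl. rewrite (S2 HM) by (apply small_map; auto).
    f_equal; apply functional_extensionality; intro i; unfold lift.
    + specialize (G1 i). destruct (inp i) eqn:E; auto. simpl. f_equal. apply (H i _ E nil); auto.
    + specialize (G2 i). destruct (binp i) eqn:E; auto. simpl. f_equal. apply (H0 i _ E nil); auto.
  - apply subst_lemma_qAbs. intros zs a b. apply (H ((zs, a, b) :: nil)).
Qed.

Lemma alpha_qinterp_gen :
  (forall X X' : QT, alpha X X' -> qGood X -> qinterp X = qinterp X') /\
  (forall A A' : QA, alphaAbs A A' -> qGoodAbs A -> qinterpAbs A = qinterpAbs A').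
Proof.
  apply alpha_alphaAbs_ind; intros.
  - reflexivity.
  - simpl in H3. destruct H3 as [_ [_ [G3 G4]]]. simpl.
    f_equal; apply functional_extensionality; intro i.
    + specialize (G3 i). destruct (inp i) eqn:E1; destruct (inp' i) eqn:E2; auto.
      * f_equal. apply (proj2 (H0 i _ _ E1 E2)); auto.
      * apply H in E2; congruence.
      * apply H in E1; congruence.
    + specialize (G4 i). destruct (binp i) eqn:E1; destruct (binp' i) eqn:E2; auto.
      * f_equal. apply (proj2 (H2 i _ _ E1 E2)); auto.
      * apply H1 in E2; congruence.
      * apply H1 in E1; congruence.
  - simpl in H5 |- *.
    assert (G' : qGood X').
    { apply (qGood_qSwap xs y x'). eapply alpha_qGood; eauto. apply qGood_qSwap; auto. }
    apply (R1 HM) with (y := y); auto; try (apply qinterp_FRESH; auto).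
    rewrite <- !qinterp_qSwap; auto. apply H4. apply qGood_qSwap; auto.
Qed.

Definition interp (t : TM) : TT := qinterp (rep t).
Definition interpAbs (a : AB) : AA := qinterpAbs (repAbs a).

Lemma interp_cls (X : QT) : qGood X -> interp (cls X) = qinterp X.
Proof.
  intros G. symmetry. apply (proj1 alpha_qinterp_gen); auto.
  apply alphaEq_alpha; auto. apply alphaEq_rep_cls.
Qed.

Lemma interpAbs_clsAbs (A : QA) : qGoodAbs A -> interpAbs (clsAbs A) = qinterpAbs A.
Proof.
  intros G. symmetry. apply (proj2 alpha_qinterp_gen); auto.
  apply alphaAbsEq_alphaAbs; auto. apply alphaAbsEq_repAbs_clsAbs.
Qed.

Lemma interp_FS_hom : FS_hom VAR OP ABS FRESH FRESHABS substT substA interp interpAbs.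
Proof.
  refine (conj _ (conj _ (conj _ (conj _ (conj _ (conj _ _)))))).
  - intros xs x. unfold Var. rewrite interp_cls; simpl; auto.
  - intros d inp binp G1 Sm1 G2 Sm2. unfold Op. rewrite interp_cls.
    + simpl. f_equal; apply functional_extensionality; intro i; unfold lift;
        [destruct (inp i) | destruct (binp i)]; reflexivity.
    + simpl. unfold lift, option_map. rewrite !small_map.
      refine (conj Sm1 (conj Sm2 (conj _ _))); intro i.
      * destruct (inp i) eqn:E; simpl; auto. apply (G1 i); auto.
      * destruct (binp i) eqn:E; simpl; auto. apply (G2 i); auto.
  - intros xs x X G. unfold Abs. rewrite interpAbs_clsAbs; simpl; auto.
  - intros X Y y ys GX GY. unfold subst. rewrite interp_cls.
    + apply (proj1 qinterp_subst_lemma); auto.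
    + apply qGood_qPsubst; auto. intros; apply qGood_upd_qVar; auto.
  - intros B Y y ys GB GY. unfold substAbs. rewrite interpAbs_clsAbs.
    + apply (proj2 qinterp_subst_lemma); auto.
    + apply qGoodAbs_qPsubstAbs; auto. intros; apply qGood_upd_qVar; auto.
  - intros xs x X G F. apply qinterp_FRESH; auto.
  - intros xs x B G F. apply qinterpAbs_FRESHABS; auto.
Qed.

Lemma FS_hom_unique (g : TM -> TT) (gAbs : AB -> AA) :
  FS_hom VAR OP ABS FRESH FRESHABS substT substA g gAbs ->
  (forall X, good X -> interp X = g X) /\ (forall B, goodAbs B -> interpAbs B = gAbs B).
Proof.
  intros [hV [hO [hA _]]].
  assert (K : (forall X : QT, qGood X -> g (cls X) = qinterp X) /\
              (forall A : QA, qGoodAbs A -> gAbs (clsAbs A) = qinterpAbs A)).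
  { apply qterm_qabs_ind; intros.
    - apply hV.
    - simpl in H1. destruct H1 as [Sm1 [Sm2 [G1 G2]]].
      rewrite (@cls_qOp d inp binp G1 G2), hO.
      + simpl. f_equal; apply functional_extensionality; intro i; unfold lift.
        * specialize (G1 i). destruct (inp i) eqn:E; simpl; auto. f_equal. apply (H i _ E); auto.
        * specialize (G2 i). destruct (binp i) eqn:E; simpl; auto. f_equal. apply (H0 i _ E); auto.
      + intros i a Ea. unfold lift in Ea. specialize (G1 i).
        destruct (inp i); inversion Ea; subst. apply good_cls; auto.
      + unfold lift, option_map. apply small_map; auto.
      + intros i a Ea. unfold lift in Ea. specialize (G2 i).
        destruct (binp i); inversion Ea; subst. apply goodAbs_clsAbs; auto.
      + unfold lift, option_map. apply small_map; auto.
    - simpl in H0. rewrite clsAbs_qAbs, hA by (auto; apply good_cls; auto). simpl. f_equal. auto. }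
  split.
  - intros X G. rewrite <- (cls_rep X) at 2. symmetry. apply (proj1 K); auto.
  - intros B G. rewrite <- (clsAbs_repAbs B) at 2. symmetry. apply (proj2 K); auto.
Qed.

End Model.
End Development.

Theorem theorem2
  (var varsort index bindex opsym : Type)
  (Hvar : infinite_regular var)
  (T A : Type)
  (VAR : varsort -> var -> T)
  (OP : opsym -> input index T -> input bindex A -> T)
  (ABS : varsort -> var -> T -> A)
  (FRESH : varsort -> var -> T -> Prop)
  (FRESHABS : varsort -> var -> A -> Prop)
  (substT : T -> T -> var -> varsort -> T)
  (substA : A -> T -> var -> varsort -> A)
  (HM : FSModel VAR OP ABS FRESH FRESHABS substT substA) :
  exists (f : term var varsort index bindex opsym -> T)
         (fAbs : abs var varsort index bindex opsym -> A),
    FS_hom VAR OP ABS FRESH FRESHABS substT substA f fAbs /\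
    forall (g : term var varsort index bindex opsym -> T)
           (gAbs : abs var varsort index bindex opsym -> A),
      FS_hom VAR OP ABS FRESH FRESHABS substT substA g gAbs ->
      (forall X, good X -> f X = g X) /\
      (forall B, goodAbs B -> fAbs B = gAbs B).
Proof.
  exists (interp VAR OP ABS), (interpAbs VAR OP ABS). split.
  - exact (interp_FS_hom Hvar HM).
  - intros g gAbs Hg. exact (FS_hom_unique Hvar Hg).
Qed.
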